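(* Let $\{\mathcal H,\Gamma\}$ be an isometric boundary pair for $A^*$ with domain $A_*=\operatorname{dom}\Gamma$ dense in $A^*$, and let $\widetilde A=\mathcal J(\Gamma)$ be its main transform. Assume there is a selfadjoint extension $H$ of $A$ with $H\subset A_*$ and a point $x\in\rho(H)\cap\mathbb R$, and let $M(x)=\{\hat h\in\mathcal H^2:\{\{f,xf\},\hat h\}\in\Gamma\text{ for some }f\in\mathfrak H\}$. Then: (i) the following are equivalent: (a) $M(x)$ is a selfadjoint relation in $\mathcal H$ and $0\in\rho(M(x)+xI)$; (b) $x\in\rho(\widetilde A)$; (ii) if (a)/(b) hold, then $\{\mathcal H,\Gamma\}$ is a unitary boundary pair for $A^*$ and its Weyl family $M(\lambda)=\{\hat h:\{\{f,\lambda f\},\hat h\}\in\Gamma\}$, $\lambda\in\mathbb C\setminus\mathbb R$, belongs to $\widetilde{\mathcal R}(\mathcal H)$.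
   Context: $A$ closed symmetric relation in a Hilbert space $\mathfrak H$; $\mathcal H$ a Hilbert space. A linear relation $\Gamma\subset\mathfrak H^2\times\mathcal H^2$ is isometric if $(f',g)-(f,g')=(h',k)-(h,k')$ for all $\{\{f,f'\},\{h,h'\}\},\{\{g,g'\},\{k,k'\}\}\in\Gamma$ and unitary if moreover $\Gamma^{-1}=\Gamma^{[*]}$, where $\Gamma^{[*]}=\{\{\{k,k'\},\{g,g'\}\}:(f',g)-(f,g')=(h',k)-(h,k')\ \forall\{\{f,f'\},\{h,h'\}\}\in\Gamma\}$. An isometric (unitary) boundary pair for $A^*$ is an isometric (unitary) $\Gamma$ with $\operatorname{dom}\Gamma\subset A^*$ dense in $A^*$. Main transform: $\mathcal J(\Gamma)=\{\{\{f,h\},\{f',-h'\}\}:\{\{f,f'\},\{h,h'\}\}\in\Gamma\}$, a linear relation in $\mathfrak H\oplus\mathcal H$. $\widetilde{\mathcal R}(\mathcal H)$ (Nevanlinna families): families of linear relations $M(\lambda)$, $\lambda\in\mathbb C\setminus\mathbb R$, in $\mathcal H$ with $M(\lambda)$ maximal dissipative for $\lambda\in\mathbb C_+$ (maximal accumulative for $\lambda\in\mathbb C_-$), $M(\lambda)^*=M(\bar\lambda)$, and $(M(\lambda)+\mu)^{-1}\in\mathcal B(\mathcal H)$ holomorphic in $\lambda\in\mathbb C_+$ ($\mathbb C_-$) for some (all) $\mu\in\mathbb C_+$ ($\mathbb C_-$). *)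

From Stdlib Require Import Reals.
Open Scope R_scope.

Record C := mkC { Cre : R ; Cim : R }.
Definition C0 : C := mkC 0 0.
Definition C1 : C := mkC 1 0.
Definition RtoC (x : R) : C := mkC x 0.
Definition Cadd (a b : C) : C := mkC (Cre a + Cre b) (Cim a + Cim b).
Definition Copp (a : C) : C := mkC (- Cre a) (- Cim a).
Definition Csub (a b : C) : C := Cadd a (Copp b).
Definition Cmul (a b : C) : C :=
  mkC (Cre a * Cre b - Cim a * Cim b) (Cre a * Cim b + Cim a * Cre b).
Definition Cconj (a : C) : C := mkC (Cre a) (- Cim a).
Definition Cmod (a : C) : R := sqrt (Cre a * Cre a + Cim a * Cim a).
Definition Cinv (a : C) : C :=
  mkC (Cre a / (Cre a * Cre a + Cim a * Cim a))
      (- Cim a / (Cre a * Cre a + Cim a * Cim a)).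

(* ---------- Complex Hilbert spaces ----------
   inner product linear in the first, conjugate-linear in the second argument *)
Record HilbertSpace := {
  hs_car :> Type;
  hs_zero : hs_car;
  hs_add : hs_car -> hs_car -> hs_car;
  hs_opp : hs_car -> hs_car;
  hs_scal : C -> hs_car -> hs_car;
  hs_inner : hs_car -> hs_car -> C;
  hs_add_assoc : forall x y z, hs_add x (hs_add y z) = hs_add (hs_add x y) z;
  hs_add_comm : forall x y, hs_add x y = hs_add y x;
  hs_add_0 : forall x, hs_add x hs_zero = x;
  hs_add_opp : forall x, hs_add x (hs_opp x) = hs_zero;
  hs_scal_assoc : forall a b x, hs_scal a (hs_scal b x) = hs_scal (Cmul a b) x;
  hs_scal_1 : forall x, hs_scal C1 x = x;
  hs_scal_distr_v : forall a x y, hs_scal a (hs_add x y) = hs_add (hs_scal a x) (hs_scal a y);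
  hs_scal_distr_s : forall a b x, hs_scal (Cadd a b) x = hs_add (hs_scal a x) (hs_scal b x);
  hs_inner_add_l : forall x y z, hs_inner (hs_add x y) z = Cadd (hs_inner x z) (hs_inner y z);
  hs_inner_scal_l : forall a x y, hs_inner (hs_scal a x) y = Cmul a (hs_inner x y);
  hs_inner_sym : forall x y, hs_inner y x = Cconj (hs_inner x y);
  hs_inner_pos : forall x, 0 <= Cre (hs_inner x x);
  hs_inner_def : forall x, hs_inner x x = C0 -> x = hs_zero;
  hs_complete : forall u : nat -> hs_car,
    (forall eps, 0 < eps -> exists N, forall m n, (N <= m)%nat -> (N <= n)%nat ->
       sqrt (Cre (hs_inner (hs_add (u m) (hs_opp (u n))) (hs_add (u m) (hs_opp (u n))))) < eps) ->
    exists l, forall eps, 0 < eps -> exists N, forall n, (N <= n)%nat ->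
       sqrt (Cre (hs_inner (hs_add (u n) (hs_opp l)) (hs_add (u n) (hs_opp l)))) < eps
}.

Arguments hs_zero {h}.
Definition vadd {X : HilbertSpace} (x y : X) : X := hs_add X x y.
Definition vopp {X : HilbertSpace} (x : X) : X := hs_opp X x.
Definition vsub {X : HilbertSpace} (x y : X) : X := vadd x (vopp y).
Definition vscal {X : HilbertSpace} (a : C) (x : X) : X := hs_scal X a x.
Definition ip {X : HilbertSpace} (x y : X) : C := hs_inner X x y.
Definition nrm {X : HilbertSpace} (x : X) : R := sqrt (Cre (ip x x)).
Definition pnrm {X Y : HilbertSpace} (x : X) (y : Y) : R :=
  sqrt (nrm x * nrm x + nrm y * nrm y).

Definition converges {X : HilbertSpace} (u : nat -> X) (l : X) : Prop :=
  forall eps, 0 < eps -> exists N, forall n, (N <= n)%nat -> nrm (vsub (u n) l) < eps.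

Definition linrel {X : HilbertSpace} (T : X -> X -> Prop) : Prop :=
  T hs_zero hs_zero /\
  forall (a : C) f f' g g', T f f' -> T g g' -> T (vadd f (vscal a g)) (vadd f' (vscal a g')).

Definition closed_rel {X : HilbertSpace} (T : X -> X -> Prop) : Prop :=
  forall (u v : nat -> X) f f', (forall n, T (u n) (v n)) ->
    converges u f -> converges v f' -> T f f'.

Definition symmetric_rel {X : HilbertSpace} (T : X -> X -> Prop) : Prop :=
  forall f f' g g', T f f' -> T g g' -> ip f' g = ip f g'.

Definition adj {X : HilbertSpace} (T : X -> X -> Prop) (g g' : X) : Prop :=
  forall f f', T f f' -> ip f' g = ip f g'.

Definition selfadjoint {X : HilbertSpace} (T : X -> X -> Prop) : Prop :=
  forall g g', T g g' <-> adj T g g'.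

(* z in rho(T): (T - z)^{-1} = {(f' - z f, f) : (f,f') in T} is (the graph of)
   an everywhere defined bounded operator *)
Definition in_resolvent {X : HilbertSpace} (T : X -> X -> Prop) (z : C) : Prop :=
  (forall f1 f1' f2 f2', T f1 f1' -> T f2 f2' ->
      vsub f1' (vscal z f1) = vsub f2' (vscal z f2) -> f1 = f2) /\
  (forall g, exists f f', T f f' /\ vsub f' (vscal z f) = g) /\
  (exists c, forall f f', T f f' -> nrm f <= c * nrm (vsub f' (vscal z f))).

(* same notion for a relation T in the orthogonal sum X (+) Y,
   T (f,h) (f',h') meaning {{f,h},{f',h'}} in T *)
Definition in_resolvent2 {X Y : HilbertSpace} (T : X -> Y -> X -> Y -> Prop) (z : C) : Prop :=
  (forall f1 h1 f1' h1' f2 h2 f2' h2', T f1 h1 f1' h1' -> T f2 h2 f2' h2' ->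
      vsub f1' (vscal z f1) = vsub f2' (vscal z f2) ->
      vsub h1' (vscal z h1) = vsub h2' (vscal z h2) -> f1 = f2 /\ h1 = h2) /\
  (forall g k, exists f h f' h', T f h f' h' /\
      vsub f' (vscal z f) = g /\ vsub h' (vscal z h) = k) /\
  (exists c, forall f h f' h', T f h f' h' ->
      pnrm f h <= c * pnrm (vsub f' (vscal z f)) (vsub h' (vscal z h))).

Definition dissipative {X : HilbertSpace} (T : X -> X -> Prop) : Prop :=
  forall h h', T h h' -> 0 <= Cim (ip h' h).
Definition accumulative {X : HilbertSpace} (T : X -> X -> Prop) : Prop :=
  forall h h', T h h' -> Cim (ip h' h) <= 0.
Definition max_dissipative {X : HilbertSpace} (T : X -> X -> Prop) : Prop :=
  linrel T /\ dissipative T /\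
  forall S, linrel S -> dissipative S -> (forall h h', T h h' -> S h h') ->
    forall h h', S h h' -> T h h'.
Definition max_accumulative {X : HilbertSpace} (T : X -> X -> Prop) : Prop :=
  linrel T /\ accumulative T /\
  forall S, linrel S -> accumulative S -> (forall h h', T h h' -> S h h') ->
    forall h h', S h h' -> T h h'.

(* ---------- Boundary pairs ----------
   Gamma f f' h h'  means  {{f,f'},{h,h'}} in Gamma *)
Definition linrel4 {X Y : HilbertSpace} (G : X -> X -> Y -> Y -> Prop) : Prop :=
  G hs_zero hs_zero hs_zero hs_zero /\
  forall (a : C) f f' h h' g g' k k', G f f' h h' -> G g g' k k' ->
    G (vadd f (vscal a g)) (vadd f' (vscal a g')) (vadd h (vscal a k)) (vadd h' (vscal a k')).

Definition isometric {X Y : HilbertSpace} (G : X -> X -> Y -> Y -> Prop) : Prop :=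
  linrel4 G /\
  forall f f' h h' g g' k k', G f f' h h' -> G g g' k k' ->
    Csub (ip f' g) (ip f g') = Csub (ip h' k) (ip h k').

(* {k^, g^} in Gamma^[*] *)
Definition bstar {X Y : HilbertSpace} (G : X -> X -> Y -> Y -> Prop)
  (k k' : Y) (g g' : X) : Prop :=
  forall f f' h h', G f f' h h' -> Csub (ip f' g) (ip f g') = Csub (ip h' k) (ip h k').

(* unitary: isometric and Gamma^{-1} = Gamma^[*] *)
Definition unitary {X Y : HilbertSpace} (G : X -> X -> Y -> Y -> Prop) : Prop :=
  isometric G /\ forall g g' k k', G g g' k k' <-> bstar G k k' g g'.

Definition dom_dense_in_adj {X Y : HilbertSpace} (A : X -> X -> Prop)
  (G : X -> X -> Y -> Y -> Prop) : Prop :=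
  (forall f f' h h', G f f' h h' -> adj A f f') /\
  (forall g g', adj A g g' -> forall eps, 0 < eps ->
     exists f f' h h', G f f' h h' /\ pnrm (vsub f g) (vsub f' g') < eps).

Definition isometric_boundary_pair {X Y : HilbertSpace} (A : X -> X -> Prop)
  (G : X -> X -> Y -> Y -> Prop) : Prop := isometric G /\ dom_dense_in_adj A G.
Definition unitary_boundary_pair {X Y : HilbertSpace} (A : X -> X -> Prop)
  (G : X -> X -> Y -> Y -> Prop) : Prop := unitary G /\ dom_dense_in_adj A G.

Definition main_transform {X Y : HilbertSpace} (G : X -> X -> Y -> Y -> Prop)
  (f : X) (h : Y) (f' : X) (k : Y) : Prop :=
  exists h', k = vopp h' /\ G f f' h h'.

Definition weyl {X Y : HilbertSpace} (G : X -> X -> Y -> Y -> Prop) (z : C)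
  (h h' : Y) : Prop := exists f, G f (vscal z f) h h'.

Definition rel_plus_scal {Y : HilbertSpace} (T : Y -> Y -> Prop) (z : C) (h k : Y) : Prop :=
  exists h', T h h' /\ k = vadd h' (vscal z h).

(* (M(l) + mu)^{-1} in B(Y) for l with P l, and holomorphic (operator norm) in l *)
Definition resolvent_holomorphic {Y : HilbertSpace} (M : C -> Y -> Y -> Prop)
  (mu : C) (P : C -> Prop) : Prop :=
  exists Rf : C -> Y -> Y,
    (forall l, P l -> forall u v, M l v (vsub u (vscal mu v)) <-> Rf l u = v) /\
    (forall l, P l ->
       (forall (a : C) u w, Rf l (vadd u (vscal a w)) = vadd (Rf l u) (vscal a (Rf l w))) /\
       exists c, forall u, nrm (Rf l u) <= c * nrm u) /\
    (forall l, P l -> exists D : Y -> Y, forall eps, 0 < eps -> exists delta, 0 < delta /\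
       forall eta, 0 < Cmod eta < delta -> P (Cadd l eta) -> forall u,
         nrm (vsub (vscal (Cinv eta) (vsub (Rf (Cadd l eta) u) (Rf l u))) (D u))
           <= eps * nrm u).

Definition nevanlinna_family {Y : HilbertSpace} (M : C -> Y -> Y -> Prop) : Prop :=
  (forall l, 0 < Cim l -> max_dissipative (M l)) /\
  (forall l, Cim l < 0 -> max_accumulative (M l)) /\
  (forall l, Cim l <> 0 -> forall h h', adj (M l) h h' <-> M (Cconj l) h h') /\
  (exists mu, 0 < Cim mu /\ resolvent_holomorphic M mu (fun l => 0 < Cim l)) /\
  (exists mu, Cim mu < 0 /\ resolvent_holomorphic M mu (fun l => Cim l < 0)).

(* The main transform [J(G)] is a symmetric relation in [Hf (+) Hc], by the Green identity of [G].
   Condition (a) makes [J(G) - x] onto: a solution is assembled from the resolvent of [H] and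
   the inverse of [M(x) + x]; conversely, (b) makes [M(x) + x] onto.  A symmetric relation [T]
   with [T - x] onto for a real [x] is selfadjoint, and its resolvent at [x] is bounded by the
   Hellinger-Toeplitz theorem; this gives (a) <-> (b).
   Since [J(G)] is then selfadjoint, [J(G) - diag(l, mu)] is onto whenever [Im l] and [Im mu]
   have the same sign (its imaginary part is coercive), and [(M(l) + mu)^{-1}] is the boundary
   component of its inverse.  This yields the maximality of [M(l)], [M(l)^* = M(conj l)] and,
   through the resolvent identity, the holomorphy of the Weyl family; finally [J(G)^* = J(G)]
   is exactly the unitarity of [G]. *)

From Stdlib Require Import Reals Lra Lia Psatz Classical ClassicalEpsilon FunctionalExtensionality.
(* [Defs] comes last so that [C] denotes its complex numbers, not the binomial coefficient. *)
From Pilot Require Import Defs.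
Open Scope R_scope.

Lemma C_ext (a b : C) : Cre a = Cre b -> Cim a = Cim b -> a = b.
Proof. destruct a, b; simpl; intros -> ->; reflexivity. Qed.

Lemma C_ring_theory : ring_theory C0 C1 Cadd Cmul Csub Copp (@eq C).
Proof.
  constructor; intros; apply C_ext; unfold Cadd, Cmul, Csub, Copp, C0, C1; simpl; ring.
Qed.
Add Ring C_ring : C_ring_theory.

Lemma Cconj_add a b : Cconj (Cadd a b) = Cadd (Cconj a) (Cconj b).
Proof. apply C_ext; simpl; ring. Qed.
Lemma Cconj_mul a b : Cconj (Cmul a b) = Cmul (Cconj a) (Cconj b).
Proof. apply C_ext; simpl; ring. Qed.
Lemma Cconj_opp a : Cconj (Copp a) = Copp (Cconj a).
Proof. apply C_ext; simpl; ring. Qed.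
Lemma Cconj_involutive a : Cconj (Cconj a) = a.
Proof. apply C_ext; simpl; ring. Qed.
Lemma Cconj_RtoC x : Cconj (RtoC x) = RtoC x.
Proof. apply C_ext; simpl; ring. Qed.
Lemma Cconj_C0 : Cconj C0 = C0.
Proof. apply C_ext; simpl; ring. Qed.

Ltac Cconj_simpl :=
  repeat rewrite ?Cconj_add, ?Cconj_mul, ?Cconj_opp, ?Cconj_involutive, ?Cconj_RtoC, ?Cconj_C0.

Lemma Cmul_inv_l a : a <> C0 -> Cmul (Cinv a) a = C1.
Proof.
  intro Ha. assert (Hn : Cre a * Cre a + Cim a * Cim a <> 0).
  { intro E. apply Ha. apply C_ext; simpl; nra. }
  apply C_ext; unfold Cinv, Cmul; simpl; field; auto.
Qed.

Lemma Cmod_nonneg a : 0 <= Cmod a.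
Proof. apply sqrt_pos. Qed.
Lemma Cmod_sq a : Cmod a * Cmod a = Cre a * Cre a + Cim a * Cim a.
Proof. unfold Cmod; rewrite sqrt_sqrt; nra. Qed.
Lemma Cmod_RtoC x : Cmod (RtoC x) = Rabs x.
Proof. unfold Cmod; simpl. rewrite <- sqrt_Rsqr_abs. f_equal. unfold Rsqr; ring. Qed.
Lemma Cmod_opp a : Cmod (Copp a) = Cmod a.
Proof. unfold Cmod; simpl; f_equal; ring. Qed.

Lemma Cmod_ge_Rabs_Cre a : Rabs (Cre a) <= Cmod a.
Proof. unfold Cmod. rewrite <- sqrt_Rsqr_abs. apply sqrt_le_1_alt. unfold Rsqr. nra. Qed.
Lemma Cmod_ge_Rabs_Cim a : Rabs (Cim a) <= Cmod a.
Proof. unfold Cmod. rewrite <- sqrt_Rsqr_abs. apply sqrt_le_1_alt. unfold Rsqr. nra. Qed.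

Lemma Cmod_triangle a b : Cmod (Cadd a b) <= Cmod a + Cmod b.
Proof.
  pose proof (Cmod_nonneg a); pose proof (Cmod_nonneg b).
  apply Rsqr_incr_0_var; [|nra]. unfold Rsqr.
  replace ((Cmod a + Cmod b) * (Cmod a + Cmod b))
    with (Cmod a * Cmod a + Cmod b * Cmod b + 2 * (Cmod a * Cmod b)) by ring.
  rewrite !Cmod_sq. simpl.
  assert (Cre a * Cre b + Cim a * Cim b <= Cmod a * Cmod b).
  { destruct (Rle_dec (Cre a * Cre b + Cim a * Cim b) 0); [nra|].
    apply Rsqr_incr_0_var; [|nra]. unfold Rsqr.
    replace (Cmod a * Cmod b * (Cmod a * Cmod b)) with ((Cmod a * Cmod a) * (Cmod b * Cmod b)) by ring.
    rewrite !Cmod_sq. pose proof (Rle_0_sqr (Cre a * Cim b - Cim a * Cre b)). unfold Rsqr in *. nra. }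
  nra.
Qed.

Section Algebra.
Context {X : HilbertSpace}.
Implicit Types u v w : X.

Lemma vadd_assoc u v w : vadd u (vadd v w) = vadd (vadd u v) w.
Proof. apply hs_add_assoc. Qed.
Lemma vadd_comm u v : vadd u v = vadd v u.
Proof. apply hs_add_comm. Qed.
Lemma vadd_0 u : vadd u hs_zero = u.
Proof. apply hs_add_0. Qed.
Lemma vadd_opp u : vadd u (vopp u) = hs_zero.
Proof. apply hs_add_opp. Qed.

Lemma ip_add_l u v w : ip (vadd u v) w = Cadd (ip u w) (ip v w).
Proof. apply hs_inner_add_l. Qed.
Lemma ip_scal_l a u w : ip (vscal a u) w = Cmul a (ip u w).
Proof. apply hs_inner_scal_l. Qed.
Lemma ip_sym u v : ip v u = Cconj (ip u v).
Proof. apply hs_inner_sym. Qed.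

Lemma ip_zero_l w : ip (@hs_zero X) w = C0.
Proof.
  assert (E : ip (@hs_zero X) w = Cadd (ip (@hs_zero X) w) (ip (@hs_zero X) w)).
  { rewrite <- ip_add_l. unfold vadd. now rewrite hs_add_0. }
  apply (f_equal Cre) in E as E1; apply (f_equal Cim) in E as E2; simpl in E1, E2.
  apply C_ext; simpl; lra.
Qed.

Lemma ip_opp_l u w : ip (vopp u) w = Copp (ip u w).
Proof.
  assert (E : Cadd (ip u w) (ip (vopp u) w) = C0).
  { rewrite <- ip_add_l, vadd_opp. apply ip_zero_l. }
  transitivity (Cadd (Cadd (ip u w) (ip (vopp u) w)) (Copp (ip u w))); [ring|].
  rewrite E. ring.
Qed.

Lemma ip_sub_l u v w : ip (vsub u v) w = Csub (ip u w) (ip v w).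
Proof. unfold vsub. rewrite ip_add_l, ip_opp_l. reflexivity. Qed.

Lemma ip_add_r u v w : ip w (vadd u v) = Cadd (ip w u) (ip w v).
Proof. rewrite ip_sym, ip_add_l, Cconj_add, <- !ip_sym. reflexivity. Qed.
Lemma ip_scal_r a u w : ip w (vscal a u) = Cmul (Cconj a) (ip w u).
Proof. rewrite ip_sym, ip_scal_l, Cconj_mul, <- !ip_sym. reflexivity. Qed.
Lemma ip_opp_r u w : ip w (vopp u) = Copp (ip w u).
Proof. rewrite ip_sym, ip_opp_l, Cconj_opp, <- !ip_sym. reflexivity. Qed.
Lemma ip_sub_r u v w : ip w (vsub u v) = Csub (ip w u) (ip w v).
Proof. unfold vsub. rewrite ip_add_r, ip_opp_r. reflexivity. Qed.
Lemma ip_zero_r w : ip w (@hs_zero X) = C0.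
Proof. rewrite ip_sym, ip_zero_l. apply Cconj_C0. Qed.

Lemma ip_self_Cim u : Cim (ip u u) = 0.
Proof. pose proof (ip_sym u u) as E. apply (f_equal Cim) in E. simpl in E. lra. Qed.
Lemma ip_self_Cre_nonneg u : 0 <= Cre (ip u u).
Proof. apply hs_inner_pos. Qed.
Lemma ip_self_real u : ip u u = RtoC (Cre (ip u u)).
Proof. apply C_ext; simpl; auto using ip_self_Cim. Qed.
Lemma ip_self_eq0 u : Cre (ip u u) = 0 -> u = hs_zero.
Proof. intro H. apply hs_inner_def. apply C_ext; simpl; auto using ip_self_Cim. Qed.

Lemma vsub_eq0 u v : vsub u v = hs_zero -> u = v.
Proof.
  intro H. transitivity (vadd (vsub u v) v).
  - unfold vsub. rewrite <- vadd_assoc, (vadd_comm (vopp v) v), vadd_opp, vadd_0. reflexivity.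
  - rewrite H, vadd_comm. apply vadd_0.
Qed.

Lemma vec_ext u v : (forall w, ip u w = ip v w) -> u = v.
Proof.
  intro H. apply vsub_eq0, ip_self_eq0.
  rewrite ip_sub_l, H. replace (Csub _ _) with C0 by ring. reflexivity.
Qed.

End Algebra.

Ltac ip_expand := repeat rewrite ?ip_add_l, ?ip_scal_l, ?ip_opp_l, ?ip_sub_l, ?ip_zero_l.

(* Vector identities are proved by testing against an arbitrary [w] and
   normalising in the ring [C]. *)
Ltac veq := apply vec_ext; let w := fresh "w" in intro w; ip_expand; try ring.

(* [use_eq E] closes [c = d] when [d - c] is [+-(a - b)] for [E : a = b]. *)
Ltac use_eq E := match type of E with ?a = ?b => match goal with |- ?c = ?d =>
   let Z := fresh "Z" in assert (Z : Csub a b = C0) by (rewrite E; ring);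
   first [ transitivity (Cadd d (Csub a b)); [ring | rewrite Z; ring]
         | transitivity (Cadd d (Copp (Csub a b))); [ring | rewrite Z; ring] ] end end.

(* [vuse Ev] proves a vector identity that follows linearly from [Ev]. *)
Ltac vuse Ev := apply vec_ext; let w := fresh "w" in intro w;
  let E := fresh "E" in pose proof (f_equal (fun t => ip t w) Ev) as E; cbv beta in E;
  ip_expand; repeat rewrite ?ip_add_l, ?ip_scal_l, ?ip_opp_l, ?ip_sub_l, ?ip_zero_l in E; use_eq E.

Definition linear_map {X Y : HilbertSpace} (L : X -> Y) : Prop :=
  forall a u v, L (vadd u (vscal a v)) = vadd (L u) (vscal a (L v)).

Lemma linear_map_zero {X Y : HilbertSpace} (L : X -> Y) : linear_map L -> L hs_zero = hs_zero.
Proof.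
  intro Hl. pose proof (Hl C1 hs_zero hs_zero) as E.
  replace (vadd (@hs_zero X) (vscal C1 hs_zero)) with (@hs_zero X) in E by veq.
  transitivity (vsub (vadd (L hs_zero) (vscal C1 (L hs_zero))) (L hs_zero)); [veq | rewrite <- E; veq].
Qed.

Lemma linear_map_scal {X Y : HilbertSpace} (L : X -> Y) a u :
  linear_map L -> L (vscal a u) = vscal a (L u).
Proof.
  intro Hl. pose proof (Hl a hs_zero u) as E. rewrite linear_map_zero in E by auto.
  replace (vadd hs_zero (vscal a u)) with (vscal a u) in E by veq. rewrite E. veq.
Qed.

Lemma linear_map_sub {X Y : HilbertSpace} (L : X -> Y) u v :
  linear_map L -> L (vsub u v) = vsub (L u) (L v).
Proof.
  intro Hl. replace (vsub u v) with (vadd u (vscal (Copp C1) v)) by veq. rewrite Hl. veq.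
Qed.

Section Norms.
Context {X : HilbertSpace}.
Implicit Types u v w : X.

Lemma nrm_nonneg u : 0 <= nrm u.
Proof. apply sqrt_pos. Qed.
Lemma nrm_sq u : nrm u * nrm u = Cre (ip u u).
Proof. unfold nrm. rewrite sqrt_sqrt; auto using ip_self_Cre_nonneg. Qed.
Lemma nrm_zero : nrm (@hs_zero X) = 0.
Proof. unfold nrm. rewrite ip_zero_l. apply sqrt_0. Qed.
Lemma nrm_eq0 u : nrm u = 0 -> u = hs_zero.
Proof. intro H. apply ip_self_eq0. rewrite <- nrm_sq, H. ring. Qed.
Lemma nrm_pos u : u <> hs_zero -> 0 < nrm u.
Proof.
  intro Hu. destruct (Rle_lt_or_eq_dec _ _ (nrm_nonneg u)); auto.
  exfalso; apply Hu, nrm_eq0; auto.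
Qed.

Lemma Cauchy_Schwarz_sq u v :
  Cre (ip u v) * Cre (ip u v) + Cim (ip u v) * Cim (ip u v) <= Cre (ip u u) * Cre (ip v v).
Proof.
  destruct (Req_dec (Cre (ip v v)) 0) as [E|E].
  - apply ip_self_eq0 in E. subst v. rewrite ip_zero_r. simpl.
    pose proof (ip_self_Cre_nonneg u). pose proof (ip_self_Cre_nonneg (@hs_zero X)). nra.
  - pose proof (ip_self_Cre_nonneg v) as Hv.
    set (t := / Cre (ip v v)).
    (* expand [0 <= |u - t <u,v> v|^2] *)
    pose proof (ip_self_Cre_nonneg (vsub u (vscal (Cmul (RtoC t) (ip u v)) v))) as P.
    rewrite ip_sub_l, !ip_sub_r, ip_scal_l, !ip_scal_r, ip_scal_l, (ip_sym u v) in P.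
    rewrite (ip_self_real u), (ip_self_real v) in P |- *.
    set (c := ip u v) in *. set (a := Cre (ip u u)) in *. set (b := Cre (ip v v)) in *.
    destruct c as [c1 c2]. simpl in P |- *.
    assert (Ht : t * b = 1) by (unfold t; field; lra).
    assert (0 <= t) by (unfold t; apply Rlt_le, Rinv_0_lt_compat; lra).
    assert (0 <= a - t * (c1*c1+c2*c2)).
    { replace (a - t * (c1*c1+c2*c2))
        with (a - 2 * t * (c1*c1+c2*c2) + (t*t*b) * (c1*c1+c2*c2))
        by (replace (t*t*b) with (t*(t*b)) by ring; rewrite Ht; ring).
      eapply Rle_trans; [apply P|]. right; ring. }
    assert (Hq : 0 <= (a - t * (c1*c1+c2*c2)) * b) by (apply Rmult_le_pos; lra).
    replace ((a - t * (c1*c1+c2*c2)) * b) with (a * b - (c1*c1+c2*c2) * (t * b)) in Hq by ring.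
    rewrite Ht in Hq. lra.
Qed.

Lemma Cauchy_Schwarz u v : Cmod (ip u v) <= nrm u * nrm v.
Proof.
  unfold Cmod, nrm. rewrite <- sqrt_mult by apply ip_self_Cre_nonneg.
  apply sqrt_le_1_alt, Cauchy_Schwarz_sq.
Qed.

Lemma nrm_scal a u : nrm (vscal a u) = Cmod a * nrm u.
Proof.
  unfold nrm, Cmod. rewrite <- sqrt_mult by (nra || apply ip_self_Cre_nonneg).
  f_equal. rewrite ip_scal_l, ip_scal_r, (ip_self_real u). destruct a; simpl; ring.
Qed.

Lemma nrm_opp u : nrm (vopp u) = nrm u.
Proof. unfold nrm. rewrite ip_opp_l, ip_opp_r. f_equal. simpl. ring. Qed.

Lemma nrm_triangle u v : nrm (vadd u v) <= nrm u + nrm v.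
Proof.
  pose proof (nrm_nonneg u); pose proof (nrm_nonneg v).
  apply Rsqr_incr_0_var; [|nra]. unfold Rsqr. rewrite nrm_sq.
  rewrite ip_add_l, !ip_add_r, (ip_sym u v). simpl. rewrite <- !nrm_sq.
  pose proof (Cauchy_Schwarz u v). pose proof (Cmod_ge_Rabs_Cre (ip u v)).
  pose proof (Rle_abs (Cre (ip u v))). nra.
Qed.

Lemma nrm_sub_sym u v : nrm (vsub u v) = nrm (vsub v u).
Proof. replace (vsub u v) with (vopp (vsub v u)) by veq. apply nrm_opp. Qed.

Lemma nrm_sub_triangle u v w : nrm (vsub u w) <= nrm (vsub u v) + nrm (vsub v w).
Proof. replace (vsub u w) with (vadd (vsub u v) (vsub v w)) by veq. apply nrm_triangle. Qed.

Definition cauchy (s : nat -> X) : Prop :=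
  forall eps, 0 < eps -> exists N, forall m n, (N <= m)%nat -> (N <= n)%nat ->
    nrm (vsub (s m) (s n)) < eps.

Lemma cauchy_converges (s : nat -> X) : cauchy s -> exists l, converges s l.
Proof. exact (hs_complete X s). Qed.

Lemma converges_cauchy (s : nat -> X) l : converges s l -> cauchy s.
Proof.
  intros H e He. destruct (H (e/2) ltac:(lra)) as [N HN]. exists N. intros m n Hm Hn.
  pose proof (nrm_sub_triangle (s m) l (s n)). rewrite (nrm_sub_sym l (s n)) in H0.
  pose proof (HN m Hm). pose proof (HN n Hn). lra.
Qed.

Lemma converges_dist_le (s : nat -> X) l u b : converges s l ->
  (exists N, forall m, (N <= m)%nat -> nrm (vsub (s m) u) <= b) -> nrm (vsub l u) <= b.
Proof.
  intros Hl [N Hb]. apply Rnot_lt_le. intro Hc.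
  set (e := nrm (vsub l u) - b).
  destruct (Hl e ltac:(unfold e; lra)) as [M H].
  specialize (H (M + N)%nat ltac:(lia)). specialize (Hb (M + N)%nat ltac:(lia)).
  pose proof (nrm_sub_triangle l (s (M + N)%nat) u).
  rewrite (nrm_sub_sym l (s (M + N)%nat)) in H0. unfold e in *. lra.
Qed.

Lemma lipschitz_tolerance K eps : 0 < eps ->
  0 < eps / (Rabs K + 1) /\ forall d, 0 <= d -> d < eps / (Rabs K + 1) -> K * d < eps.
Proof.
  intro He. assert (HK : 0 < Rabs K + 1) by (pose proof (Rabs_pos K); lra).
  split; [apply Rdiv_lt_0_compat; lra|]. intros d Hd0 Hd.
  apply Rle_lt_trans with (Rabs K * d); [apply Rmult_le_compat_r; [lra|apply Rle_abs]|].
  apply Rle_lt_trans with (Rabs K * (eps / (Rabs K + 1))).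
  - apply Rmult_le_compat_l; [apply Rabs_pos|lra].
  - replace (Rabs K * (eps / (Rabs K + 1))) with (eps - eps / (Rabs K + 1)) by (field; lra).
    assert (0 < eps / (Rabs K + 1)) by (apply Rdiv_lt_0_compat; lra). lra.
Qed.

Lemma converges_lin (s t : nat -> X) l k a : converges s l -> converges t k ->
  converges (fun n => vadd (s n) (vscal a (t n))) (vadd l (vscal a k)).
Proof.
  intros Hs Ht eps He.
  destruct (lipschitz_tolerance (Cmod a) (eps / 2) ltac:(lra)) as [Hd Hlip].
  destruct (Hs (eps / 2) ltac:(lra)) as [N1 H1]. destruct (Ht _ Hd) as [N2 H2].
  exists (N1 + N2)%nat. intros n Hn.
  replace (vsub (vadd (s n) (vscal a (t n))) (vadd l (vscal a k)))
    with (vadd (vsub (s n) l) (vscal a (vsub (t n) k))) by veq.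
  eapply Rle_lt_trans; [apply nrm_triangle|]. rewrite nrm_scal.
  specialize (H1 n ltac:(lia)). specialize (H2 n ltac:(lia)).
  pose proof (Hlip _ (nrm_nonneg _) H2). lra.
Qed.

End Norms.

Lemma converges_bounded_map {X Y : HilbertSpace} (L : X -> Y) K (s : nat -> X) l :
  linear_map L -> (forall u, nrm (L u) <= K * nrm u) ->
  converges s l -> converges (fun n => L (s n)) (L l).
Proof.
  intros Hlin Hbd Hc e He.
  destruct (lipschitz_tolerance K e He) as [Hd Hlip].
  destruct (Hc _ Hd) as [N HN]. exists N. intros n Hn.
  rewrite <- linear_map_sub by auto.
  eapply Rle_lt_trans; [apply Hbd|]. apply Hlip; [apply nrm_nonneg|auto].
Qed.

(** * The Hellinger--Toeplitz theorem *)

Section HellingerToeplitz.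
Context {X : HilbertSpace}.
Implicit Types u v w : X.

Lemma norming_vector w : exists e, nrm e <= 1 /\ ip e w = RtoC (nrm w).
Proof.
  destruct (classic (w = hs_zero)) as [->|Hw].
  - exists hs_zero. rewrite nrm_zero, ip_zero_l. split; [lra|apply C_ext; reflexivity].
  - pose proof (nrm_pos w Hw) as Hp. exists (vscal (RtoC (/ nrm w)) w). split.
    + rewrite nrm_scal, Cmod_RtoC, Rabs_right.
      * right. field. lra.
      * apply Rle_ge, Rlt_le, Rinv_0_lt_compat; auto.
    + rewrite ip_scal_l, ip_self_real, <- nrm_sq. apply C_ext; simpl; field; lra.
Qed.

(* One of [x + r e] and [x - r e] is far from [w^perp], since their
   inner products with [w] differ by [2 r |w|]. *)
Lemma gliding_step w r x : 0 <= r ->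
  exists x', nrm (vsub x' x) <= r /\ r * nrm w <= Cmod (ip x' w).
Proof.
  intro Hr. destruct (norming_vector w) as [e [He1 He]].
  assert (Hstep : nrm (vscal (RtoC r) e) <= r).
  { rewrite nrm_scal, Cmod_RtoC, Rabs_right by lra. pose proof (nrm_nonneg e). nra. }
  destruct (Rle_dec (r * nrm w) (Cmod (ip (vadd x (vscal (RtoC r) e)) w))) as [Hp|Hp].
  - exists (vadd x (vscal (RtoC r) e)). split; [|auto].
    replace (vsub (vadd x (vscal (RtoC r) e)) x) with (vscal (RtoC r) e) by veq. auto.
  - exists (vsub x (vscal (RtoC r) e)). split.
    + replace (vsub (vsub x (vscal (RtoC r) e)) x) with (vopp (vscal (RtoC r) e)) by veq.
      rewrite nrm_opp. auto.
    + pose proof (Cmod_triangle (ip (vadd x (vscal (RtoC r) e)) w)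
                    (Copp (ip (vsub x (vscal (RtoC r) e)) w))) as Ht.
      replace (Cadd (ip (vadd x (vscal (RtoC r) e)) w) (Copp (ip (vsub x (vscal (RtoC r) e)) w)))
        with (RtoC (2 * r * nrm w)) in Ht
        by (rewrite ip_sub_l, ip_add_l, ip_scal_l, He; apply C_ext; simpl; ring).
      rewrite Cmod_opp, Cmod_RtoC, Rabs_right in Ht.
      * lra.
      * pose proof (nrm_nonneg w). apply Rle_ge. nra.
Qed.

Lemma pow3_pos n : 0 < 3 ^ n.
Proof. apply pow_lt; lra. Qed.

Lemma geometric_limit (xs : nat -> X) :
  (forall n, nrm (vsub (xs (S n)) (xs n)) <= / 3 ^ (S n)) ->
  exists x, converges xs x /\ forall n, nrm (vsub x (xs n)) <= / 3 ^ n / 2.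
Proof.
  intro Hstep.
  assert (Hpartial : forall n k, nrm (vsub (xs (n + k)%nat) (xs n)) <= / 3 ^ n / 2 * (1 - / 3 ^ k)).
  { intros n k. induction k.
    - rewrite Nat.add_0_r. replace (vsub (xs n) (xs n)) with (@hs_zero X) by veq.
      rewrite nrm_zero. simpl. rewrite Rinv_1. lra.
    - rewrite Nat.add_succ_r.
      eapply Rle_trans; [apply (nrm_sub_triangle _ (xs (n + k)%nat))|].
      pose proof (Hstep (n + k)%nat) as Hs.
      replace (3 ^ S (n + k)) with (3 ^ n * (3 * 3 ^ k)) in Hs
        by (rewrite <- Nat.add_succ_r, pow_add; reflexivity).
      pose proof (pow3_pos n). pose proof (pow3_pos k). simpl.
      replace (/ 3 ^ n / 2 * (1 - / (3 * 3 ^ k)))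
        with (/ 3 ^ n / 2 * (1 - / 3 ^ k) + / (3 ^ n * (3 * 3 ^ k))) by (field; lra).
      lra. }
  assert (Htail : forall n m, (n <= m)%nat -> nrm (vsub (xs m) (xs n)) <= / 3 ^ n / 2).
  { intros n m Hnm. replace m with (n + (m - n))%nat by lia.
    eapply Rle_trans; [apply Hpartial|].
    pose proof (Rinv_0_lt_compat _ (pow3_pos n)). pose proof (Rinv_0_lt_compat _ (pow3_pos (m - n))).
    nra. }
  destruct (cauchy_converges xs) as [x Hx].
  { intros eps Heps.
    destruct (pow_lt_1_zero (/ 3) ltac:(rewrite Rabs_right; lra) eps Heps) as [N HN].
    exists N. intros m n Hm Hn.
    eapply Rle_lt_trans; [apply (nrm_sub_triangle _ (xs N))|]. rewrite (nrm_sub_sym (xs N)).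
    pose proof (Htail N m Hm). pose proof (Htail N n Hn). specialize (HN N (le_n _)).
    rewrite Rabs_right, pow_inv in HN; [lra|]. apply Rle_ge, pow_le. lra. }
  exists x. split; [auto|]. intro n. apply (converges_dist_le xs); auto. exists n. apply Htail.
Qed.

Lemma gliding_hump (w : nat -> X) :
  exists x, forall n, / 3 ^ (S n) * nrm (w n) / 2 <= Cmod (ip x (w n)).
Proof.
  assert (Hnext : forall p : nat * X, exists x',
    nrm (vsub x' (snd p)) <= / 3 ^ (S (fst p)) /\
    / 3 ^ (S (fst p)) * nrm (w (fst p)) <= Cmod (ip x' (w (fst p))))
    by (intros [n x]; apply gliding_step, Rlt_le, Rinv_0_lt_compat, pow3_pos).
  destruct (choice _ Hnext) as [next Hn].
  set (xs := fix xs (n : nat) : X := match n with O => hs_zero | S m => next (m, xs m) end).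
  assert (Hxs : forall n, xs (S n) = next (n, xs n)) by reflexivity.
  destruct (geometric_limit xs) as [x [_ Hx]].
  { intro n. rewrite Hxs. apply (Hn (n, xs n)). }
  exists x. intro n.
  pose proof (proj2 (Hn (n, xs n))) as Hfar. cbn [fst snd] in Hfar. rewrite <- Hxs in Hfar.
  pose proof (Cauchy_Schwarz (vsub x (xs (S n))) (w n)) as Hcs.
  pose proof (Cmod_triangle (ip x (w n)) (Copp (ip (vsub x (xs (S n))) (w n)))) as Ht.
  replace (Cadd (ip x (w n)) (Copp (ip (vsub x (xs (S n))) (w n)))) with (ip (xs (S n)) (w n)) in Ht
    by (rewrite ip_sub_l; ring).
  rewrite Cmod_opp in Ht.
  pose proof (Hx (S n)). pose proof (nrm_nonneg (w n)). pose proof (nrm_nonneg (vsub x (xs (S n)))).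
  assert (nrm (vsub x (xs (S n))) * nrm (w n) <= / 3 ^ S n / 2 * nrm (w n)) by (apply Rmult_le_compat_r; auto).
  lra.
Qed.

Lemma bounded_of_unit_ball (R : X -> X) c : linear_map R ->
  (forall y, nrm y <= 1 -> nrm (R y) <= c) -> forall u, nrm (R u) <= c * nrm u.
Proof.
  intros Rlin Hc u. destruct (classic (u = hs_zero)) as [->|Hu].
  - rewrite linear_map_zero, nrm_zero by auto. lra.
  - pose proof (nrm_pos u Hu) as Hp. assert (Hi : 0 < / nrm u) by (apply Rinv_0_lt_compat; auto).
    specialize (Hc (vscal (RtoC (/ nrm u)) u)).
    rewrite linear_map_scal, !nrm_scal, Cmod_RtoC, Rabs_right in Hc by (auto || lra).
    assert (Hy : / nrm u * nrm u <= 1) by (right; field; lra).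
    specialize (Hc Hy). apply (Rmult_le_compat_l (nrm u)) in Hc; [|lra].
    replace (nrm u * (/ nrm u * nrm (R u))) with (nrm (R u)) in Hc by (field; lra). lra.
Qed.

Theorem Hellinger_Toeplitz (R : X -> X) : linear_map R ->
  (forall u v, ip (R u) v = ip u (R v)) -> exists c, forall u, nrm (R u) <= c * nrm u.
Proof.
  intros Rlin Rsym. apply NNPP. intro Hunb.
  set (K := fun n : nat => 2 * INR (S n) * 3 ^ (S n)).
  assert (Hy : forall n, exists y, nrm y <= 1 /\ K n < nrm (R y)).
  { intro n. apply NNPP. intro Hn. apply Hunb. exists (K n).
    apply bounded_of_unit_ball; auto. intros y Hy. apply Rnot_lt_le. intro Hc. eauto. }
  destruct (choice _ Hy) as [y Hy'].
  destruct (gliding_hump (fun n => R (y n))) as [x Hx].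
  destruct (INR_unbounded (nrm (R x))) as [n Hn].
  assert (Hbd : Cmod (ip x (R (y n))) <= nrm (R x)).
  { rewrite <- Rsym. destruct (Hy' n) as [Hy1 _]. pose proof (Cauchy_Schwarz (R x) (y n)).
    pose proof (nrm_nonneg (R x)). nra. }
  specialize (Hx n). destruct (Hy' n) as [_ HK]. unfold K in HK.
  pose proof (pow3_pos (S n)).
  assert (INR (S n) < / 3 ^ (S n) * nrm (R (y n)) / 2).
  { apply (Rmult_lt_reg_l (2 * 3 ^ (S n))); [lra|]. field_simplify; lra. }
  rewrite S_INR in *. lra.
Qed.

End HellingerToeplitz.

(** * Closed subspaces with trivial orthogonal complement *)

Section Subspaces.
Context {X : HilbertSpace}.
Implicit Types u v w : X.

Definition subspace (V : X -> Prop) : Prop :=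
  V hs_zero /\ forall a u v, V u -> V v -> V (vadd u (vscal a v)).

Definition closed_subspace (V : X -> Prop) : Prop :=
  subspace V /\ forall (s : nat -> X) l, (forall n, V (s n)) -> converges s l -> V l.

Lemma parallelogram u v :
  Cre (ip (vsub u v) (vsub u v)) + Cre (ip (vadd u v) (vadd u v)) =
  2 * Cre (ip u u) + 2 * Cre (ip v v).
Proof. rewrite ip_sub_l, !ip_sub_r, ip_add_l, !ip_add_r. simpl. ring. Qed.

(* Compare [|z|^2] with [|z - t <z,u> u|^2] for a small [t > 0]. *)
Lemma orthogonal_of_nearest z V : subspace V ->
  (forall u, V u -> nrm z <= nrm (vsub z u)) -> forall u, V u -> ip u z = C0.
Proof.
  intros [V0 Vlin] Hmin u Hu.
  enough (Hc : ip z u = C0) by (rewrite ip_sym, Hc; apply Cconj_C0).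
  set (c := ip z u). set (t := / (Cre (ip u u) + 1)).
  pose proof (ip_self_Cre_nonneg u) as Hu0.
  assert (Ht : 0 < t) by (apply Rinv_0_lt_compat; lra).
  assert (HV : V (vscal (Cmul (RtoC t) c) u)).
  { replace (vscal (Cmul (RtoC t) c) u) with (vadd hs_zero (vscal (Cmul (RtoC t) c) u)) by veq. auto. }
  specialize (Hmin _ HV).
  pose proof (nrm_nonneg z). pose proof (nrm_nonneg (vsub z (vscal (Cmul (RtoC t) c) u))).
  assert (Hsq : nrm z * nrm z <= nrm (vsub z (vscal (Cmul (RtoC t) c) u)) * nrm (vsub z (vscal (Cmul (RtoC t) c) u))) by nra.
  rewrite !nrm_sq, ip_sub_l, !ip_sub_r, ip_scal_l, !ip_scal_r, ip_scal_l, (ip_sym z u) in Hsq.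
  fold c in Hsq. rewrite (ip_self_real z), (ip_self_real u) in Hsq.
  set (a := Cre (ip z z)) in *. set (b := Cre (ip u u)) in *.
  destruct c as [c1 c2] eqn:Ec. simpl in Hsq.
  assert (Htb : t * (b + 1) = 1) by (unfold t; field; lra).
  assert (Hs : (c1*c1+c2*c2) * (t * (2 - t*b)) <= 0).
  { match type of Hsq with _ <= ?r => replace ((c1*c1+c2*c2) * (t * (2 - t*b))) with (a - r) by ring end. lra. }
  assert (Hp : 0 < t * (2 - t * b)) by (assert (t * b < 1) by nra; apply Rmult_lt_0_compat; lra).
  assert (c1*c1+c2*c2 <= 0) by (destruct (Rle_dec (c1*c1+c2*c2) 0); auto; exfalso; nra).
  apply C_ext; simpl; nra.
Qed.

(* By the parallelogram law, [|v_n - v_k|^2 <= 2(|g - v_n|^2 + |g - v_k|^2) - 4 d^2]. *)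
Lemma minimizing_sequence_cauchy V g d (vs : nat -> X) : subspace V -> 0 <= d ->
  (forall u, V u -> d <= nrm (vsub g u)) ->
  (forall n, V (vs n) /\ nrm (vsub g (vs n)) < d + / INR (S n)) -> cauchy vs.
Proof.
  intros [V0 Vlin] Hd0 Hd Hvs.
  assert (Hinv : forall n, 0 < / INR (S n) <= 1).
  { intro n. split; [apply Rinv_0_lt_compat, lt_0_INR; lia|].
    rewrite <- Rinv_1. apply Rinv_le_contravar; [lra|]. rewrite S_INR. pose proof (pos_INR n). lra. }
  set (K := 2 * d + 1).
  assert (Hsq : forall n, Cre (ip (vsub g (vs n)) (vsub g (vs n))) <= d * d + K * / INR (S n)).
  { intro n. destruct (Hvs n) as [_ H]. rewrite <- nrm_sq.
    pose proof (nrm_nonneg (vsub g (vs n))). pose proof (Hinv n). unfold K. nra. }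
  assert (Hpar : forall n k, nrm (vsub (vs n) (vs k)) * nrm (vsub (vs n) (vs k)) <=
                             2 * K * (/ INR (S n) + / INR (S k))).
  { intros n k. pose proof (parallelogram (vsub g (vs n)) (vsub g (vs k))) as P.
    set (m := vscal (RtoC (/2)) (vadd (vs n) (vs k))).
    replace (vsub (vsub g (vs n)) (vsub g (vs k))) with (vopp (vsub (vs n) (vs k))) in P by veq.
    replace (vadd (vsub g (vs n)) (vsub g (vs k))) with (vscal (RtoC 2) (vsub g m)) in P
      by (unfold m; veq; apply C_ext; simpl; field).
    rewrite ip_scal_l, ip_scal_r, ip_opp_l, ip_opp_r in P.
    assert (Vm : V m).
    { unfold m. replace (vscal (RtoC (/2)) (vadd (vs n) (vs k)))
        with (vadd hs_zero (vscal (RtoC (/2)) (vadd (vs n) (vscal C1 (vs k))))) by veq.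
      apply Vlin; auto. apply Vlin; apply Hvs. }
    pose proof (Hd _ Vm). pose proof (nrm_nonneg (vsub g m)).
    assert (d * d <= Cre (ip (vsub g m) (vsub g m))) by (rewrite <- nrm_sq; nra).
    rewrite (ip_self_real (vsub g m)) in P. simpl in P. rewrite nrm_sq.
    pose proof (Hsq n). pose proof (Hsq k). lra. }
  intros eps He.
  assert (HK : 0 < K) by (unfold K; lra).
  destruct (archimed_cor1 (eps * eps / (4 * K))) as [N [HN HN0]].
  { apply Rdiv_lt_0_compat; nra. }
  exists N. intros m n Hm Hn.
  assert (Hi : forall j, (N <= j)%nat -> / INR (S j) <= / INR N).
  { intros j Hj. apply Rinv_le_contravar; [apply lt_0_INR; lia|apply le_INR; lia]. }
  pose proof (Hpar m n). pose proof (Hi m Hm). pose proof (Hi n Hn).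
  assert (4 * K * / INR N < eps * eps).
  { apply (Rmult_lt_compat_l (4 * K)) in HN; [|lra].
    replace (4 * K * (eps * eps / (4 * K))) with (eps * eps) in HN by (field; lra). lra. }
  pose proof (nrm_nonneg (vsub (vs m) (vs n))). nra.
Qed.

Lemma nearest_point_exists V g : closed_subspace V ->
  exists v, V v /\ forall u, V u -> nrm (vsub g v) <= nrm (vsub g u).
Proof.
  intros [[V0 Vlin] Vcl].
  set (E := fun r => exists v, V v /\ r = - nrm (vsub g v)).
  destruct (completeness E) as [m [Hub Hlub]].
  { exists 0. intros r [v [_ ->]]. pose proof (nrm_nonneg (vsub g v)). lra. }
  { exists (- nrm (vsub g hs_zero)), hs_zero. auto. }
  set (d := - m).
  assert (Hd1 : forall v, V v -> d <= nrm (vsub g v)).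
  { intros v Hv. unfold d. assert (- nrm (vsub g v) <= m) by (apply Hub; exists v; auto). lra. }
  assert (Hd2 : forall eps, 0 < eps -> exists v, V v /\ nrm (vsub g v) < d + eps).
  { intros eps He. apply NNPP. intro Hn. assert (m <= m - eps); [|lra].
    apply Hlub. intros r [v [Hv ->]]. apply Rnot_lt_le. intro Hc. apply Hn. exists v. split; auto. unfold d. lra. }
  assert (Hd0 : 0 <= d).
  { apply Rnot_lt_le. intro Hneg. destruct (Hd2 (- d)) as [v [_ Hv]]; [lra|].
    pose proof (nrm_nonneg (vsub g v)). lra. }
  assert (Hs : forall n : nat, exists v, V v /\ nrm (vsub g v) < d + / INR (S n))
    by (intro n; apply Hd2, Rinv_0_lt_compat, lt_0_INR; lia).
  destruct (choice _ Hs) as [vs Hvs].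
  destruct (cauchy_converges vs) as [v Hv].
  { apply (minimizing_sequence_cauchy V g d); [split|..]; auto. }
  exists v. split; [apply (Vcl vs); auto; apply Hvs|].
  intros u Hu. apply Rle_trans with d; [|auto].
  apply Rnot_lt_le. intro Hc. set (e := (nrm (vsub g v) - d) / 2).
  destruct (Hv e ltac:(unfold e; lra)) as [N1 HN1].
  destruct (archimed_cor1 e ltac:(unfold e; lra)) as [N2 [HN2 HN20]].
  set (n := (N1 + N2)%nat).
  specialize (HN1 n ltac:(unfold n; lia)). destruct (Hvs n) as [_ Hn].
  assert (/ INR (S n) <= / INR N2) by (apply Rinv_le_contravar; [apply lt_0_INR; lia|apply le_INR; unfold n; lia]).
  pose proof (nrm_sub_triangle g (vs n) v). unfold e in *. lra.
Qed.

Lemma closed_subspace_full V : closed_subspace V ->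
  (forall z, (forall v, V v -> ip v z = C0) -> z = hs_zero) -> forall g, V g.
Proof.
  intros HV Horth g. destruct (nearest_point_exists V g HV) as [v [Hv Hmin]].
  destruct HV as [[V0 Vlin] _].
  assert (Hz : vsub g v = hs_zero).
  { apply Horth, (orthogonal_of_nearest (vsub g v) V); [split; auto|].
    intros u Hu. replace (vsub (vsub g v) u) with (vsub g (vadd v (vscal C1 u))) by veq. auto. }
  apply vsub_eq0 in Hz. subst g. auto.
Qed.

End Subspaces.

Lemma sqrt_add_le a b : 0 <= a -> 0 <= b -> sqrt (a + b) <= sqrt a + sqrt b.
Proof.
  intros Ha Hb. pose proof (sqrt_pos a); pose proof (sqrt_pos b).
  apply Rsqr_incr_0_var; [|lra]. unfold Rsqr.
  replace ((sqrt a + sqrt b) * (sqrt a + sqrt b)) with (sqrt a * sqrt a + sqrt b * sqrt b + 2 * sqrt a * sqrt b) by ring.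
  rewrite !sqrt_sqrt by lra. nra.
Qed.

Section ProductSpace.
Context (X Y : HilbertSpace).

Definition padd (a b : X * Y) : X * Y := (vadd (fst a) (fst b), vadd (snd a) (snd b)).
Definition popp (a : X * Y) : X * Y := (vopp (fst a), vopp (snd a)).
Definition pscal (c : C) (a : X * Y) : X * Y := (vscal c (fst a), vscal c (snd a)).
Definition pip (a b : X * Y) : C := Cadd (ip (fst a) (fst b)) (ip (snd a) (snd b)).
Definition pdist (a b : X * Y) : R := sqrt (Cre (pip (padd a (popp b)) (padd a (popp b)))).

Lemma pdist_components a b :
  nrm (vsub (fst a) (fst b)) <= pdist a b /\ nrm (vsub (snd a) (snd b)) <= pdist a b /\
  pdist a b <= nrm (vsub (fst a) (fst b)) + nrm (vsub (snd a) (snd b)).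
Proof.
  pose proof (ip_self_Cre_nonneg (vsub (fst a) (fst b))).
  pose proof (ip_self_Cre_nonneg (vsub (snd a) (snd b))).
  unfold pdist, pip, nrm; simpl. fold (vsub (fst a) (fst b)) (vsub (snd a) (snd b)).
  repeat split; [apply sqrt_le_1_alt; lra|apply sqrt_le_1_alt; lra|apply sqrt_add_le; lra].
Qed.

Lemma prod_complete (s : nat -> X * Y) :
  (forall eps, 0 < eps -> exists N, forall m n, (N <= m)%nat -> (N <= n)%nat -> pdist (s m) (s n) < eps) ->
  exists l, forall eps, 0 < eps -> exists N, forall n, (N <= n)%nat -> pdist (s n) l < eps.
Proof.
  intro Hs.
  assert (Hc1 : cauchy (fun n => fst (s n))).
  { intros e He. destruct (Hs e He) as [N HN]. exists N. intros m n Hm Hn.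
    pose proof (pdist_components (s m) (s n)). specialize (HN m n Hm Hn). lra. }
  assert (Hc2 : cauchy (fun n => snd (s n))).
  { intros e He. destruct (Hs e He) as [N HN]. exists N. intros m n Hm Hn.
    pose proof (pdist_components (s m) (s n)). specialize (HN m n Hm Hn). lra. }
  destruct (cauchy_converges _ Hc1) as [l1 H1]. destruct (cauchy_converges _ Hc2) as [l2 H2].
  exists (l1, l2). intros e He.
  destruct (H1 (e/2) ltac:(lra)) as [N1 HN1]. destruct (H2 (e/2) ltac:(lra)) as [N2 HN2].
  exists (N1 + N2)%nat. intros n Hn. specialize (HN1 n ltac:(lia)). specialize (HN2 n ltac:(lia)).
  pose proof (pdist_components (s n) (l1, l2)). simpl in *. lra.
Qed.

Definition prod_hilbert : HilbertSpace.
Proof.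
  refine (Build_HilbertSpace (X * Y) (hs_zero, hs_zero) padd popp pscal pip _ _ _ _ _ _ _ _ _ _ _ _ _ prod_complete).
  - intros [] [] []; unfold padd; simpl; f_equal; apply hs_add_assoc.
  - intros [] []; unfold padd; simpl; f_equal; apply hs_add_comm.
  - intros []; unfold padd; simpl; f_equal; apply hs_add_0.
  - intros []; unfold padd, popp; simpl; f_equal; apply hs_add_opp.
  - intros a b []; unfold pscal; simpl; f_equal; apply hs_scal_assoc.
  - intros []; unfold pscal; simpl; f_equal; apply hs_scal_1.
  - intros a [] []; unfold pscal, padd; simpl; f_equal; apply hs_scal_distr_v.
  - intros a b []; unfold pscal, padd; simpl; f_equal; apply hs_scal_distr_s.
  - intros [] [] []; unfold pip, padd; simpl. rewrite !ip_add_l. ring.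
  - intros a [] []; unfold pip, pscal; simpl. rewrite !ip_scal_l. ring.
  - intros [] []; unfold pip; simpl. rewrite Cconj_add, <- !hs_inner_sym. reflexivity.
  - intros [a b]; unfold pip; simpl.
    pose proof (ip_self_Cre_nonneg a). pose proof (ip_self_Cre_nonneg b). simpl. lra.
  - intros [a b] E; unfold pip in E; simpl in E.
    pose proof (ip_self_Cre_nonneg a). pose proof (ip_self_Cre_nonneg b).
    apply (f_equal Cre) in E. simpl in E.
    assert (Ea : a = hs_zero) by (apply ip_self_eq0; lra).
    assert (Eb : b = hs_zero) by (apply ip_self_eq0; lra).
    now subst.
Defined.

End ProductSpace.

Section ProductLemmas.
Context {X Y : HilbertSpace}.
Local Notation P := (prod_hilbert X Y).

Lemma prod_vadd (u v : P) : vadd u v = (vadd (fst u) (fst v), vadd (snd u) (snd v)).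
Proof. reflexivity. Qed.
Lemma prod_vsub (u v : P) : vsub u v = (vsub (fst u) (fst v), vsub (snd u) (snd v)).
Proof. reflexivity. Qed.
Lemma prod_vscal a (u : P) : vscal a u = (vscal a (fst u), vscal a (snd u)).
Proof. reflexivity. Qed.
Lemma prod_ip (u v : P) : ip u v = Cadd (ip (fst u) (fst v)) (ip (snd u) (snd v)).
Proof. reflexivity. Qed.

Lemma prod_nrm (f : X) (h : Y) : @nrm P (f, h) = pnrm f h.
Proof. unfold pnrm. rewrite !nrm_sq. reflexivity. Qed.
Lemma prod_nrm_sq (u : P) : nrm u * nrm u = nrm (fst u) * nrm (fst u) + nrm (snd u) * nrm (snd u).
Proof. rewrite !nrm_sq, prod_ip. reflexivity. Qed.

Lemma pnrm_fst (f : X) (h : Y) : nrm f <= pnrm f h.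
Proof.
  unfold pnrm. rewrite <- (sqrt_Rsqr (nrm f)) at 1 by apply nrm_nonneg.
  apply sqrt_le_1_alt. unfold Rsqr. pose proof (nrm_nonneg h). nra.
Qed.
Lemma pnrm_snd (f : X) (h : Y) : nrm h <= pnrm f h.
Proof.
  unfold pnrm. rewrite <- (sqrt_Rsqr (nrm h)) at 1 by apply nrm_nonneg.
  apply sqrt_le_1_alt. unfold Rsqr. pose proof (nrm_nonneg f). nra.
Qed.
Lemma pnrm_0l (h : Y) : pnrm (@hs_zero X) h = nrm h.
Proof.
  unfold pnrm. rewrite nrm_zero, Rmult_0_l, Rplus_0_l. apply sqrt_square, nrm_nonneg.
Qed.
Lemma pnrm_0r (f : X) : pnrm f (@hs_zero Y) = nrm f.
Proof.
  unfold pnrm. rewrite nrm_zero, Rmult_0_l, Rplus_0_r. apply sqrt_square, nrm_nonneg.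
Qed.
Lemma prod_nrm_snd (u : P) : nrm (snd u) <= nrm u.
Proof. destruct u. rewrite prod_nrm. apply pnrm_snd. Qed.

End ProductLemmas.

Lemma Cmod_eq0 (z : C) : Cmod z = 0 -> z = C0.
Proof.
  intro H. pose proof (Cmod_sq z) as E. rewrite H, Rmult_0_l in E.
  apply C_ext; simpl; nra.
Qed.

Lemma adj_closed {X : HilbertSpace} (T : X -> X -> Prop) : closed_rel (adj T).
Proof.
  intros u v g g' Hn Hu Hv f f' Hf.
  enough (Csub (ip f' g) (ip f g') = C0) as E by (use_eq E).
  apply Cmod_eq0, Rle_antisym; [|apply Cmod_nonneg].
  apply Rnot_lt_le. intro Hpos.
  set (eps := Cmod (Csub (ip f' g) (ip f g'))) in Hpos.
  destruct (lipschitz_tolerance (nrm f' + nrm f) eps Hpos) as [Hd Hlip].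
  destruct (Hu _ Hd) as [N1 H1]. destruct (Hv _ Hd) as [N2 H2].
  set (n := (N1 + N2)%nat). specialize (H1 n ltac:(unfold n; lia)). specialize (H2 n ltac:(unfold n; lia)).
  assert (Esplit : Csub (ip f' g) (ip f g') =
                   Cadd (ip f (vsub (v n) g')) (Copp (ip f' (vsub (u n) g)))).
  { rewrite !ip_sub_r, (Hn n f f' Hf). ring. }
  pose proof (Cmod_triangle (ip f (vsub (v n) g')) (Copp (ip f' (vsub (u n) g)))) as Ht.
  rewrite Cmod_opp, <- Esplit in Ht. fold eps in Ht.
  pose proof (Cauchy_Schwarz f (vsub (v n) g')). pose proof (Cauchy_Schwarz f' (vsub (u n) g)).
  set (a := nrm (vsub (u n) g)) in *. set (b := nrm (vsub (v n) g')) in *.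
  pose proof (nrm_nonneg f). pose proof (nrm_nonneg f').
  pose proof (Rmax_l a b). pose proof (Rmax_r a b).
  assert (Hm : (nrm f' + nrm f) * Rmax a b < eps)
    by (apply Hlip; [apply Rle_trans with a; [apply nrm_nonneg|auto] | apply Rmax_lub_lt; auto]).
  nra.
Qed.

Section Relations.
Context {X : HilbertSpace}.
Implicit Types u v w : X.
Variable T : X -> X -> Prop.
Hypothesis Tlin : linrel T.

Lemma linrel_sub u u' v v' : T u u' -> T v v' -> T (vsub u v) (vsub u' v').
Proof.
  intros H1 H2. pose proof (proj2 Tlin (Copp C1) _ _ _ _ H1 H2) as E.
  replace (vsub u v) with (vadd u (vscal (Copp C1) v)) by veq.
  replace (vsub u' v') with (vadd u' (vscal (Copp C1) v')) by veq. auto.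
Qed.

Lemma adj_lin_comb a g g' k k' : adj T g g' -> adj T k k' ->
  adj T (vadd g (vscal a k)) (vadd g' (vscal a k')).
Proof.
  intros H1 H2 f f' Hf. rewrite !ip_add_r, !ip_scal_r, (H1 f f' Hf), (H2 f f' Hf). reflexivity.
Qed.

Definition onto_at (z : C) : Prop := forall g, exists u u', T u u' /\ vsub u' (vscal z u) = g.

Lemma adj_eigenvector_eq0 (x : R) : onto_at (RtoC x) ->
  forall u, adj T u (vscal (RtoC x) u) -> u = hs_zero.
Proof.
  intros Hs u Hu. destruct (Hs u) as [t [t' [Ht E]]].
  apply ip_self_eq0. specialize (Hu t t' Ht). rewrite ip_scal_r, Cconj_RtoC in Hu.
  rewrite <- E at 1. rewrite ip_sub_l, Hu, ip_scal_l. simpl. ring.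
Qed.

Hypothesis Tsym : symmetric_rel T.

Lemma symmetric_Cim u u' : T u u' -> Cim (ip u' u) = 0.
Proof.
  intro H. pose proof (Tsym _ _ _ _ H H) as E. rewrite (ip_sym u' u) in E.
  apply (f_equal Cim) in E. simpl in E. lra.
Qed.

Lemma symmetric_sub_adj u u' : T u u' -> adj T u u'.
Proof. intros H f f' Hf. apply Tsym; auto. Qed.

Lemma injective_at_of_onto (x : R) : onto_at (RtoC x) ->
  forall u1 u1' u2 u2', T u1 u1' -> T u2 u2' ->
  vsub u1' (vscal (RtoC x) u1) = vsub u2' (vscal (RtoC x) u2) -> u1 = u2.
Proof.
  intros Hs u1 u1' u2 u2' H1 H2 E. apply vsub_eq0, (adj_eigenvector_eq0 x Hs).
  replace (vscal (RtoC x) (vsub u1 u2)) with (vsub u1' u2') by vuse E.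
  apply symmetric_sub_adj, linrel_sub; auto.
Qed.

Lemma adj_sub_of_onto (x : R) : onto_at (RtoC x) -> forall v v', adj T v v' -> T v v'.
Proof.
  intros Hs v v' Hv. destruct (Hs (vsub v' (vscal (RtoC x) v))) as [u [u' [Hu E]]].
  assert (Z : vsub v u = hs_zero).
  { apply (adj_eigenvector_eq0 x Hs).
    replace (vscal (RtoC x) (vsub v u)) with (vadd v' (vscal (Copp C1) u')) by vuse E.
    replace (vsub v u) with (vadd v (vscal (Copp C1) u)) by veq.
    apply adj_lin_comb; auto. apply symmetric_sub_adj; auto. }
  apply vsub_eq0 in Z. subst u. replace v' with u'; auto. vuse E.
Qed.

Section RealResolvent.
Variable x : R.
Hypothesis Honto : onto_at (RtoC x).

Definition real_resolvent (g : X) : X :=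
  epsilon (inhabits hs_zero) (fun u => exists u', T u u' /\ vsub u' (vscal (RtoC x) u) = g).

Lemma real_resolvent_spec g :
  exists u', T (real_resolvent g) u' /\ vsub u' (vscal (RtoC x) (real_resolvent g)) = g.
Proof. unfold real_resolvent. apply epsilon_spec. destruct (Honto g) as [u [u' H]]. exists u, u'. auto. Qed.

Lemma real_resolvent_unique g u u' : T u u' -> vsub u' (vscal (RtoC x) u) = g -> real_resolvent g = u.
Proof.
  intros H E. destruct (real_resolvent_spec g) as [v' [Hv Ev]].
  apply (injective_at_of_onto x Honto _ _ _ _ Hv H). rewrite Ev, E. reflexivity.
Qed.

Lemma real_resolvent_linear : linear_map real_resolvent.
Proof.
  intros a g k. destruct (real_resolvent_spec g) as [u' [Hu Eu]].
  destruct (real_resolvent_spec k) as [v' [Hv Ev]].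
  apply (real_resolvent_unique _ _ _ (proj2 Tlin a _ _ _ _ Hu Hv)).
  transitivity (vadd (vsub u' (vscal (RtoC x) (real_resolvent g)))
                     (vscal a (vsub v' (vscal (RtoC x) (real_resolvent k))))); [veq|].
  rewrite Eu, Ev. reflexivity.
Qed.

Lemma real_resolvent_symmetric g k : ip (real_resolvent g) k = ip g (real_resolvent k).
Proof.
  destruct (real_resolvent_spec g) as [u' [Hu Eu]]. destruct (real_resolvent_spec k) as [v' [Hv Ev]].
  rewrite <- Eu at 2. rewrite <- Ev at 1.
  rewrite ip_sub_l, ip_sub_r, ip_scal_l, ip_scal_r, Cconj_RtoC, (Tsym _ _ _ _ Hu Hv). ring.
Qed.

Lemma real_resolvent_bounded : exists c, forall g, nrm (real_resolvent g) <= c * nrm g.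
Proof.
  apply Hellinger_Toeplitz; [apply real_resolvent_linear|apply real_resolvent_symmetric].
Qed.

End RealResolvent.

Lemma selfadjoint_of_onto (x : R) : onto_at (RtoC x) -> selfadjoint T.
Proof.
  intros Hs g g'. split; [apply symmetric_sub_adj|apply (adj_sub_of_onto x Hs)].
Qed.

Lemma in_resolvent_of_onto (x : R) : onto_at (RtoC x) -> in_resolvent T (RtoC x).
Proof.
  intro Hs. split; [|split].
  - apply (injective_at_of_onto x Hs).
  - exact Hs.
  - destruct (real_resolvent_bounded x Hs) as [c Hc]. exists c. intros f f' Hf.
    pose proof (real_resolvent_unique x Hs _ f f' Hf eq_refl) as E. rewrite <- E at 1. apply Hc.
Qed.

End Relations.

(** * Perturbation of a selfadjoint relation by a coercive operator *)

Section CoerciveShift.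
Context {X : HilbertSpace}.
Implicit Types u v w : X.
Variable T : X -> X -> Prop.
Hypothesis Tlin : linrel T.
Hypothesis Tsym : symmetric_rel T.
Hypothesis Tadj : forall v v', adj T v v' -> T v v'.
Variables D Dadj : X -> X.
Hypothesis Dlin : linear_map D.
Variable K : R.
Hypothesis Dbd : forall u, nrm (D u) <= K * nrm u.
Hypothesis Dadj_spec : forall u v, ip (D u) v = ip u (Dadj v).
Variable c : R.
Hypothesis Hc : 0 < c.
Hypothesis Dcoer : forall u, c * (nrm u * nrm u) <= Rabs (Cim (ip (D u) u)).

(* [Im <u' - D u, u> = - Im <D u, u>] because [<u', u>] is real. *)
Lemma shift_lower_bound u u' : T u u' -> c * nrm u <= nrm (vsub u' (D u)).
Proof.
  intro H. pose proof (Dcoer u).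
  assert (E : Cim (ip (vsub u' (D u)) u) = - Cim (ip (D u) u)).
  { rewrite ip_sub_l. simpl. rewrite (symmetric_Cim T Tsym u u' H). ring. }
  pose proof (Cauchy_Schwarz (vsub u' (D u)) u).
  pose proof (Cmod_ge_Rabs_Cim (ip (vsub u' (D u)) u)) as Him. rewrite E, Rabs_Ropp in Him.
  pose proof (nrm_nonneg u). pose proof (nrm_nonneg (vsub u' (D u))).
  destruct (Rle_lt_or_eq_dec _ _ (nrm_nonneg u)) as [Hp|Hz]; [|rewrite <- Hz; lra].
  apply (Rmult_le_reg_r (nrm u)); auto. lra.
Qed.

Definition shift_range (g : X) : Prop := exists u u', T u u' /\ vsub u' (D u) = g.

Lemma shift_range_closed_subspace : closed_subspace shift_range.
Proof.
  assert (Tcl : closed_rel T).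
  { intros s s' l l' Hn Hs Hs'. apply Tadj.
    apply (adj_closed T s s'); auto. intro n. apply (symmetric_sub_adj T Tsym), Hn. }
  split; [split|].
  - exists hs_zero, hs_zero. split; [apply Tlin|]. rewrite linear_map_zero by auto. veq.
  - intros a g k [u [u' [Hu Eu]]] [v [v' [Hv Ev]]].
    exists (vadd u (vscal a v)), (vadd u' (vscal a v')). split; [apply Tlin; auto|].
    rewrite Dlin, <- Eu, <- Ev. veq.
  - intros s l Hs Hcv.
    destruct (choice _ Hs) as [us Hus]. destruct (choice _ Hus) as [us' Hus'].
    assert (Hcu : cauchy us).
    { intros e He. destruct (converges_cauchy s l Hcv (c * e) ltac:(nra)) as [N HN].
      exists N. intros m n Hm Hn. specialize (HN m n Hm Hn).
      destruct (Hus' m) as [Hm1 Em]. destruct (Hus' n) as [Hn1 En].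
      pose proof (shift_lower_bound _ _ (linrel_sub T Tlin _ _ _ _ Hm1 Hn1)) as L.
      replace (vsub (vsub (us' m) (us' n)) (D (vsub (us m) (us n)))) with (vsub (s m) (s n)) in L
        by (rewrite <- Em, <- En; (rewrite (linear_map_sub D) by exact Dlin); veq).
      apply (Rmult_lt_reg_l c); lra. }
    destruct (cauchy_converges us Hcu) as [ul Hul].
    exists ul, (vadd l (D ul)). split; [|veq].
    apply (Tcl us us'); [apply Hus'|auto|].
    replace us' with (fun n => vadd (s n) (vscal C1 (D (us n))))
      by (apply functional_extensionality; intro n; destruct (Hus' n) as [_ En]; rewrite <- En; veq).
    replace (vadd l (D ul)) with (vadd l (vscal C1 (D ul))) by veq.
    apply converges_lin; auto. apply (converges_bounded_map D K); auto.
Qed.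

(* A vector orthogonal to the range satisfies [z T^* Dadj z], hence
   [Im <D z, z> = 0], and coercivity forces [z = 0]. *)
Lemma shift_range_orthogonal_eq0 z : (forall v, shift_range v -> ip v z = C0) -> z = hs_zero.
Proof.
  intro Hz.
  assert (Az : adj T z (Dadj z)).
  { intros f f' Hf. specialize (Hz (vsub f' (D f)) (ex_intro _ f (ex_intro _ f' (conj Hf eq_refl)))).
    rewrite ip_sub_l, Dadj_spec in Hz. use_eq Hz. }
  pose proof (symmetric_Cim T Tsym _ _ (Tadj _ _ Az)) as I.
  rewrite (ip_sym z (Dadj z)), <- Dadj_spec in I. simpl in I.
  pose proof (Dcoer z) as Hcz. replace (Cim (ip (D z) z)) with 0 in Hcz by lra. rewrite Rabs_R0 in Hcz.
  assert (nrm z * nrm z <= 0) by (apply (Rmult_le_reg_l c); lra).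
  apply nrm_eq0, Rle_antisym; [nra|apply nrm_nonneg].
Qed.

Lemma shift_onto g : exists u u', T u u' /\ vsub u' (D u) = g.
Proof.
  exact (closed_subspace_full shift_range shift_range_closed_subspace shift_range_orthogonal_eq0 g).
Qed.

Definition shift_resolvent (g : X) : X :=
  epsilon (inhabits hs_zero) (fun u => exists u', T u u' /\ vsub u' (D u) = g).

Lemma shift_resolvent_spec g :
  exists u', T (shift_resolvent g) u' /\ vsub u' (D (shift_resolvent g)) = g.
Proof.
  unfold shift_resolvent. apply epsilon_spec. destruct (shift_onto g) as [u [u' H]]. exists u, u'. auto.
Qed.

Lemma shift_resolvent_unique g u u' : T u u' -> vsub u' (D u) = g -> shift_resolvent g = u.
Proof.
  intros Hu E. destruct (shift_resolvent_spec g) as [v' [Hv Ev]].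
  pose proof (shift_lower_bound _ _ (linrel_sub T Tlin _ _ _ _ Hv Hu)) as L.
  replace (vsub (vsub v' u') (D (vsub (shift_resolvent g) u))) with (@hs_zero X) in L
    by (symmetry; rewrite (linear_map_sub D) by exact Dlin;
        transitivity (vsub (vsub v' (D (shift_resolvent g))) (vsub u' (D u))); [veq|rewrite Ev, E; veq]).
  rewrite nrm_zero in L. pose proof (nrm_nonneg (vsub (shift_resolvent g) u)).
  apply vsub_eq0, nrm_eq0. nra.
Qed.

Lemma shift_resolvent_linear : linear_map shift_resolvent.
Proof.
  intros a g k. destruct (shift_resolvent_spec g) as [u' [Hu Eu]].
  destruct (shift_resolvent_spec k) as [v' [Hv Ev]].
  apply (shift_resolvent_unique _ _ _ (proj2 Tlin a _ _ _ _ Hu Hv)).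
  rewrite Dlin.
  transitivity (vadd (vsub u' (D (shift_resolvent g))) (vscal a (vsub v' (D (shift_resolvent k))))); [veq|].
  rewrite Eu, Ev. reflexivity.
Qed.

Lemma shift_resolvent_bound g : nrm (shift_resolvent g) <= / c * nrm g.
Proof.
  destruct (shift_resolvent_spec g) as [u' [Hu Eu]].
  pose proof (shift_lower_bound _ _ Hu) as L. rewrite Eu in L.
  apply (Rmult_le_reg_l c); auto. rewrite <- Rmult_assoc, Rinv_r by lra. lra.
Qed.

End CoerciveShift.

(** * The main transform and the Weyl family at a real point *)

Section PlusScal.
Context {Y : HilbertSpace}.
Variable M : Y -> Y -> Prop.

Lemma rel_plus_scal_linrel z : linrel M -> linrel (rel_plus_scal M z).
Proof.
  intros [M0 Mlin]. split.
  - exists hs_zero. split; [auto|veq].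
  - intros a f k g k' [f' [Mf ->]] [g' [Mg ->]].
    exists (vadd f' (vscal a g')). split; [apply Mlin; auto|veq].
Qed.

Lemma rel_plus_scal_symmetric (x : R) : symmetric_rel M -> symmetric_rel (rel_plus_scal M (RtoC x)).
Proof.
  intros Msym f k g k' [f' [Mf ->]] [g' [Mg ->]].
  rewrite ip_add_l, ip_add_r, ip_scal_l, ip_scal_r, Cconj_RtoC, (Msym _ _ _ _ Mf Mg). ring.
Qed.

Lemma onto_of_rel_plus_scal_onto (x : R) :
  onto_at (rel_plus_scal M (RtoC x)) C0 -> onto_at M (RtoC (- x)).
Proof.
  intros Hs k. destruct (Hs k) as [h [k' [[h' [Mh ->]] E]]].
  exists h, h'. split; [auto|]. rewrite <- E. veq. apply C_ext; simpl; ring.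
Qed.

End PlusScal.

Section BoundaryRelation.
Context {Hf Hc : HilbertSpace}.
Variable G : Hf -> Hf -> Hc -> Hc -> Prop.
Hypothesis HG : isometric G.
Local Notation P := (prod_hilbert Hf Hc).

Lemma boundary_zero : G hs_zero hs_zero hs_zero hs_zero.
Proof. apply (proj1 (proj1 HG)). Qed.
Lemma boundary_lin a f f' h h' g g' k k' : G f f' h h' -> G g g' k k' ->
  G (vadd f (vscal a g)) (vadd f' (vscal a g')) (vadd h (vscal a k)) (vadd h' (vscal a k')).
Proof. apply (proj2 (proj1 HG)). Qed.
Lemma boundary_green f f' h h' g g' k k' : G f f' h h' -> G g g' k k' ->
  Csub (ip f' g) (ip f g') = Csub (ip h' k) (ip h k').
Proof. apply (proj2 HG). Qed.

Definition transform_rel (u u' : P) : Prop := main_transform G (fst u) (snd u) (fst u') (snd u').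

Lemma transform_rel_linrel : linrel transform_rel.
Proof.
  split.
  - exists hs_zero. simpl. split; [veq|apply boundary_zero].
  - intros a [f h] [f' k] [g k0] [g' k'] [h1 [E1 G1]] [h2 [E2 G2]]. cbn [fst snd] in *.
    unfold transform_rel. rewrite !prod_vadd, !prod_vscal. cbn [fst snd].
    exists (vadd h1 (vscal a h2)). split; [subst; veq|apply boundary_lin; auto].
Qed.

Lemma transform_rel_symmetric : symmetric_rel transform_rel.
Proof.
  intros [f h] [f' k] [g k0] [g' k'] [h1 [E1 G1]] [h2 [E2 G2]]. cbn [fst snd] in *. subst.
  rewrite !prod_ip. cbn [fst snd]. rewrite ip_opp_l, ip_opp_r.
  pose proof (boundary_green _ _ _ _ _ _ _ _ G1 G2) as I. use_eq I.
Qed.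

Lemma weyl_linrel l : linrel (weyl G l).
Proof.
  split.
  - exists hs_zero. replace (vscal l (@hs_zero Hf)) with (@hs_zero Hf) by veq. apply boundary_zero.
  - intros a f f' g g' [f1 G1] [f2 G2]. exists (vadd f1 (vscal a f2)).
    replace (vscal l (vadd f1 (vscal a f2))) with (vadd (vscal l f1) (vscal a (vscal l f2))) by veq.
    apply boundary_lin; auto.
Qed.

Lemma weyl_conj_sub_adj l h h' : weyl G (Cconj l) h h' -> adj (weyl G l) h h'.
Proof.
  intros [f Gf] k k' [g Gg]. pose proof (boundary_green _ _ _ _ _ _ _ _ Gg Gf) as I.
  rewrite ip_scal_l, ip_scal_r, Cconj_involutive in I.
  symmetry. use_eq I.
Qed.

Lemma weyl_real_symmetric (x : R) : symmetric_rel (weyl G (RtoC x)).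
Proof.
  intros h h' k k' Mh Mk. apply (weyl_conj_sub_adj (RtoC x)); [|auto].
  rewrite Cconj_RtoC. auto.
Qed.

Lemma weyl_Cim l h h' : weyl G l h h' -> exists f : Hf, Cim (ip h' h) = Cim l * (nrm f * nrm f).
Proof.
  intros [f Gf]. exists f. pose proof (boundary_green _ _ _ _ _ _ _ _ Gf Gf) as I.
  rewrite ip_scal_l, ip_scal_r, (ip_sym h' h), (ip_self_real f) in I. rewrite nrm_sq.
  apply (f_equal Cim) in I. simpl in I. lra.
Qed.

Section RealPoint.
Variable x : R.
Local Notation M := (weyl G (RtoC x)).

Lemma weyl_plus_onto_of_transform_resolvent : in_resolvent2 (main_transform G) (RtoC x) ->
  onto_at (rel_plus_scal M (RtoC x)) C0.
Proof.
  intros [_ [Hsur _]] k. destruct (Hsur hs_zero (vopp k)) as [f [h [f' [h'' [[h' [-> Gf]] [E1 E2]]]]]].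
  apply vsub_eq0 in E1. subst f'. exists h, k. split.
  - exists h'. split; [exists f; auto|]. symmetry. vuse E2.
  - veq.
Qed.

Lemma weyl_resolvent_of_plus_onto : onto_at (rel_plus_scal M (RtoC x)) C0 ->
  selfadjoint M /\ in_resolvent (rel_plus_scal M (RtoC x)) C0.
Proof.
  intro Hs. split.
  - apply (selfadjoint_of_onto M (weyl_real_symmetric x) (- x)).
    apply onto_of_rel_plus_scal_onto; auto.
  - apply (in_resolvent_of_onto _ (rel_plus_scal_linrel _ _ (weyl_linrel _))
            (rel_plus_scal_symmetric _ _ (weyl_real_symmetric x)) 0 Hs).
Qed.

(* [(f, h)] is found as [(f_H + f_2, h_1 + h_2)]: [f_H] solves the equation in
   [H], and the defect in the boundary space is corrected by the Weyl family. *)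
Lemma transform_onto_of_weyl_plus_onto (H : Hf -> Hf -> Prop) :
  (forall f f', H f f' -> exists h h', G f f' h h') -> onto_at H (RtoC x) ->
  onto_at (rel_plus_scal M (RtoC x)) C0 -> onto_at transform_rel (RtoC x).
Proof.
  intros HdomG Honto Msur [g k].
  destruct (Honto g) as [fH [fH' [HfH EfH]]].
  destruct (HdomG _ _ HfH) as [h1 [h1' G1]].
  destruct (Msur (vopp (vadd k (vadd h1' (vscal (RtoC x) h1))))) as [h2 [k2 [[h2' [[f2 G2] ->]] Ew]]].
  exists (vadd fH (vscal C1 f2), vadd h1 (vscal C1 h2)),
         (vadd fH' (vscal C1 (vscal (RtoC x) f2)), vopp (vadd h1' (vscal C1 h2'))).
  split.
  - exists (vadd h1' (vscal C1 h2')). split; [auto|apply boundary_lin; auto].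
  - rewrite prod_vsub, prod_vscal. cbn [fst snd]. f_equal.
    + rewrite <- EfH. veq.
    + vuse Ew.
Qed.

Lemma transform_resolvent_of_onto : onto_at transform_rel (RtoC x) ->
  in_resolvent2 (main_transform G) (RtoC x).
Proof.
  intro Hs.
  destruct (in_resolvent_of_onto _ transform_rel_linrel transform_rel_symmetric x Hs)
    as [Hinj [_ [c Hbd]]].
  split; [|split].
  - intros f1 h1 f1' h1' f2 h2 f2' h2' T1 T2 E1 E2.
    assert (E : (f1, h1) = (f2, h2) :> P).
    { apply (Hinj (f1, h1) (f1', h1') (f2, h2) (f2', h2') T1 T2).
      rewrite !prod_vsub, !prod_vscal. cbn [fst snd]. rewrite E1, E2. reflexivity. }
    inversion E. auto.
  - intros g k. destruct (Hs (g, k)) as [[f h] [[f' h'] [Ht E]]].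
    rewrite prod_vsub, prod_vscal in E. cbn [fst snd] in E. inversion E.
    exists f, h, f', h'. auto.
  - exists c. intros f h f' h' Ht. specialize (Hbd (f, h) (f', h') Ht).
    rewrite prod_vsub, prod_vscal, !prod_nrm in Hbd. exact Hbd.
Qed.

End RealPoint.

End BoundaryRelation.

(** * The Weyl family off the real axis *)

Section WeylFamily.
Context {Hf Hc : HilbertSpace}.
Variable G : Hf -> Hf -> Hc -> Hc -> Prop.
Hypothesis HG : isometric G.
Variable x : R.
Local Notation P := (prod_hilbert Hf Hc).
Local Notation T := (transform_rel G).
Hypothesis Honto : onto_at T (RtoC x).

Lemma transform_adj_sub : forall v v', adj T v v' -> T v v'.
Proof. exact (adj_sub_of_onto T (transform_rel_symmetric G HG) x Honto). Qed.

Definition diag (l mu : C) (u : P) : P := (vscal l (fst u), vscal mu (snd u)).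
Definition first_component (u : P) : P := (fst u, hs_zero).
Definition diag_coercivity (l mu : C) : R := Rmin (Rabs (Cim l)) (Rabs (Cim mu)).

Lemma diag_linear l mu : linear_map (diag l mu).
Proof. intros a u v. unfold diag. rewrite !prod_vadd, !prod_vscal. cbn [fst snd]. f_equal; veq. Qed.

Lemma diag_bound l mu (u : P) : nrm (diag l mu u) <= (Cmod l + Cmod mu) * nrm u.
Proof.
  pose proof (Cmod_nonneg l). pose proof (Cmod_nonneg mu). pose proof (nrm_nonneg u).
  apply Rsqr_incr_0_var; [|nra]. unfold Rsqr. rewrite prod_nrm_sq. unfold diag. cbn [fst snd].
  rewrite !nrm_scal.
  replace ((Cmod l + Cmod mu) * nrm u * ((Cmod l + Cmod mu) * nrm u))
    with ((Cmod l + Cmod mu) * (Cmod l + Cmod mu) * (nrm u * nrm u)) by ring.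
  rewrite prod_nrm_sq. pose proof (nrm_nonneg (fst u)). pose proof (nrm_nonneg (snd u)).
  assert (Cmod l * Cmod l <= (Cmod l + Cmod mu) * (Cmod l + Cmod mu)) by nra.
  assert (Cmod mu * Cmod mu <= (Cmod l + Cmod mu) * (Cmod l + Cmod mu)) by nra.
  nra.
Qed.

Lemma diag_adj l mu (u v : P) : ip (diag l mu u) v = ip u (diag (Cconj l) (Cconj mu) v).
Proof.
  unfold diag. rewrite !prod_ip. cbn [fst snd]. rewrite !ip_scal_l, !ip_scal_r. Cconj_simpl. reflexivity.
Qed.

Lemma cmin_pos l mu : 0 < Cim l * Cim mu -> 0 < diag_coercivity l mu.
Proof.
  intro H. unfold diag_coercivity. apply Rmin_glb_lt; apply Rabs_pos_lt; intro E; rewrite E in H; lra.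
Qed.

Lemma diag_coercive l mu (u : P) : 0 < Cim l * Cim mu ->
  diag_coercivity l mu * (nrm u * nrm u) <= Rabs (Cim (ip (diag l mu u) u)).
Proof.
  intro H. rewrite prod_nrm_sq, prod_ip. unfold diag. cbn [fst snd]. rewrite !ip_scal_l.
  rewrite (ip_self_real (fst u)), (ip_self_real (snd u)), <- !nrm_sq. simpl.
  set (a := nrm (fst u) * nrm (fst u)). set (b := nrm (snd u) * nrm (snd u)).
  assert (0 <= a) by (unfold a; nra). assert (0 <= b) by (unfold b; nra).
  pose proof (Rmin_l (Rabs (Cim l)) (Rabs (Cim mu))) as Hmin1.
  pose proof (Rmin_r (Rabs (Cim l)) (Rabs (Cim mu))) as Hmin2. fold (diag_coercivity l mu) in Hmin1, Hmin2.
  destruct (Rlt_dec 0 (Cim l)).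
  - assert (0 < Cim mu) by nra. rewrite Rabs_right in Hmin1, Hmin2 by lra. rewrite Rabs_right by nra. nra.
  - assert (Cim l < 0) by (destruct (Req_dec (Cim l) 0) as [E|E]; [rewrite E in H; lra|lra]).
    assert (Cim mu < 0) by nra. rewrite Rabs_left in Hmin1, Hmin2 by lra. rewrite Rabs_left1 by nra. nra.
Qed.

Definition shifted_resolvent (l mu : C) : P -> P := shift_resolvent T (diag l mu).

Section HalfPlane.
Variables l mu : C.
Hypothesis Hlm : 0 < Cim l * Cim mu.

Lemma shifted_resolvent_spec g : exists u', T (shifted_resolvent l mu g) u' /\
  vsub u' (diag l mu (shifted_resolvent l mu g)) = g.
Proof.
  exact (shift_resolvent_spec T (transform_rel_linrel G HG) (transform_rel_symmetric G HG)
    transform_adj_sub (diag l mu) _ (diag_linear l mu) _ (diag_bound l mu) (diag_adj l mu)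
    _ (cmin_pos l mu Hlm) (fun u => diag_coercive l mu u Hlm) g).
Qed.

Lemma shifted_resolvent_unique g u u' : T u u' -> vsub u' (diag l mu u) = g ->
  shifted_resolvent l mu g = u.
Proof.
  exact (shift_resolvent_unique T (transform_rel_linrel G HG) (transform_rel_symmetric G HG)
    transform_adj_sub (diag l mu) _ (diag_linear l mu) _ (diag_bound l mu) (diag_adj l mu)
    _ (cmin_pos l mu Hlm) (fun u => diag_coercive l mu u Hlm) g u u').
Qed.

Lemma shifted_resolvent_linear : linear_map (shifted_resolvent l mu).
Proof.
  exact (shift_resolvent_linear T (transform_rel_linrel G HG) (transform_rel_symmetric G HG)
    transform_adj_sub (diag l mu) _ (diag_linear l mu) _ (diag_bound l mu) (diag_adj l mu)
    _ (cmin_pos l mu Hlm) (fun u => diag_coercive l mu u Hlm)).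
Qed.

Lemma shifted_resolvent_bound g : nrm (shifted_resolvent l mu g) <= / diag_coercivity l mu * nrm g.
Proof.
  exact (shift_resolvent_bound T (transform_rel_linrel G HG) (transform_rel_symmetric G HG)
    transform_adj_sub (diag l mu) _ (diag_linear l mu) _ (diag_bound l mu) (diag_adj l mu)
    _ (cmin_pos l mu Hlm) (fun u => diag_coercive l mu u Hlm) g).
Qed.

(* [(M(l) + mu)^{-1} u] is the boundary component of [(T - diag l mu)^{-1} (0, -u)]. *)
Definition weyl_resolvent (u : Hc) : Hc := snd (shifted_resolvent l mu (hs_zero, vopp u)).

Lemma weyl_resolvent_spec u : weyl G l (weyl_resolvent u) (vsub u (vscal mu (weyl_resolvent u))).
Proof.
  unfold weyl_resolvent. destruct (shifted_resolvent_spec (hs_zero, vopp u)) as [u' [[h' [Eh Gu]] Eu]].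
  destruct (shifted_resolvent l mu (hs_zero, vopp u)) as [f v]. destruct u' as [f' k].
  cbn [fst snd] in *. unfold diag in Eu. rewrite prod_vsub in Eu. cbn [fst snd] in Eu.
  inversion Eu as [[E1 E2]]. apply vsub_eq0 in E1. subst f' k. exists f.
  replace (vsub u (vscal mu v)) with h'; auto. vuse E2.
Qed.

Lemma weyl_resolvent_iff u v : weyl G l v (vsub u (vscal mu v)) <-> weyl_resolvent u = v.
Proof.
  split; [|intros <-; apply weyl_resolvent_spec].
  intros [f Gf]. unfold weyl_resolvent.
  rewrite (shifted_resolvent_unique _ (f, v) (vscal l f, vopp (vsub u (vscal mu v))));
    [reflexivity| exists (vsub u (vscal mu v)); auto|].
  unfold diag. rewrite prod_vsub. cbn [fst snd]. f_equal; veq.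
Qed.

Lemma weyl_resolvent_linear : linear_map weyl_resolvent.
Proof.
  intros a u w. unfold weyl_resolvent.
  replace ((hs_zero, vopp (vadd u (vscal a w))) : P)
    with (vadd ((hs_zero, vopp u) : P) (vscal a ((hs_zero, vopp w) : P)))
    by (rewrite prod_vadd, prod_vscal; cbn [fst snd]; f_equal; veq).
  rewrite shifted_resolvent_linear. reflexivity.
Qed.

Lemma weyl_resolvent_bound u : nrm (weyl_resolvent u) <= / diag_coercivity l mu * nrm u.
Proof.
  unfold weyl_resolvent. eapply Rle_trans; [apply prod_nrm_snd|].
  eapply Rle_trans; [apply shifted_resolvent_bound|].
  rewrite prod_nrm, pnrm_0l, nrm_opp. right; reflexivity.
Qed.

End HalfPlane.

Lemma first_component_nrm (u : P) : nrm (first_component u) <= nrm u.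
Proof. destruct u as [f k]. unfold first_component. rewrite !prod_nrm, pnrm_0r. apply pnrm_fst. Qed.

(* [T w w'] with [w' - diag l mu w = g] also gives
   [w' - diag l' mu w = g + (l - l') (fst w, 0)]. *)
Lemma shifted_resolvent_identity l l' mu g : 0 < Cim l * Cim mu -> 0 < Cim l' * Cim mu ->
  vsub (shifted_resolvent l' mu g) (shifted_resolvent l mu g) =
  vscal (Csub l' l) (shifted_resolvent l' mu (first_component (shifted_resolvent l mu g))).
Proof.
  intros H1 H2. destruct (shifted_resolvent_spec l mu H1 g) as [w' [Hw Ew]].
  set (w := shifted_resolvent l mu g) in *.
  assert (E : shifted_resolvent l' mu (vadd g (vscal (Csub l l') (first_component w))) = w).
  { apply (shifted_resolvent_unique l' mu H2 _ _ w' Hw). rewrite <- Ew.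
    unfold diag, first_component. rewrite !prod_vsub, prod_vadd, prod_vscal. cbn [fst snd]. f_equal; veq. }
  rewrite (shifted_resolvent_linear l' mu H2) in E.
  transitivity (vsub (shifted_resolvent l' mu g) (vadd (shifted_resolvent l' mu g)
    (vscal (Csub l l') (shifted_resolvent l' mu (first_component w))))); [rewrite E; reflexivity|veq].
Qed.

Definition weyl_resolvent_deriv (l mu : C) (u : Hc) : Hc :=
  snd (shifted_resolvent l mu (first_component (shifted_resolvent l mu (hs_zero, vopp u)))).

(* Applying the resolvent identity twice: the error of the difference quotient
   is again [l' - l] times a triple product of resolvents. *)
Lemma weyl_resolvent_quotient_error l l' mu u :
  0 < Cim l * Cim mu -> 0 < Cim l' * Cim mu -> l' <> l ->
  vsub (vscal (Cinv (Csub l' l)) (vsub (weyl_resolvent l' mu u) (weyl_resolvent l mu u)))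
       (weyl_resolvent_deriv l mu u) =
  vscal (Csub l' l) (snd (shifted_resolvent l' mu (first_component
    (shifted_resolvent l mu (first_component (shifted_resolvent l mu (hs_zero, vopp u))))))).
Proof.
  intros H1 H2 Hne. unfold weyl_resolvent, weyl_resolvent_deriv.
  set (g0 := (hs_zero, vopp u) : P).
  set (h := first_component (shifted_resolvent l mu g0)).
  assert (Hnz : Csub l' l <> C0) by (intro E; apply Hne; transitivity (Cadd (Csub l' l) l); [ring|rewrite E; ring]).
  change (vsub (snd (shifted_resolvent l' mu g0)) (snd (shifted_resolvent l mu g0)))
    with (snd (vsub (shifted_resolvent l' mu g0) (shifted_resolvent l mu g0))).
  rewrite (shifted_resolvent_identity l l' mu g0 H1 H2). fold h.
  change (vscal (Cinv (Csub l' l)) (snd (vscal (Csub l' l) (shifted_resolvent l' mu h))))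
    with (vscal (Cinv (Csub l' l)) (vscal (Csub l' l) (snd (shifted_resolvent l' mu h)))).
  replace (vscal (Cinv (Csub l' l)) (vscal (Csub l' l) (snd (shifted_resolvent l' mu h))))
    with (snd (shifted_resolvent l' mu h))
    by (unfold vscal; rewrite hs_scal_assoc, Cmul_inv_l by auto; symmetry; apply hs_scal_1).
  change (snd (vsub (shifted_resolvent l' mu h) (shifted_resolvent l mu h)) =
          snd (vscal (Csub l' l) (shifted_resolvent l' mu (first_component (shifted_resolvent l mu h))))).
  rewrite (shifted_resolvent_identity l l' mu h H1 H2). reflexivity.
Qed.

Lemma weyl_resolvent_quotient_error_bound l l' mu u :
  0 < Cim l * Cim mu -> 0 < Cim l' * Cim mu ->
  nrm (snd (shifted_resolvent l' mu (first_component
    (shifted_resolvent l mu (first_component (shifted_resolvent l mu (hs_zero, vopp u)))))))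
  <= / diag_coercivity l' mu * (/ diag_coercivity l mu * (/ diag_coercivity l mu * nrm u)).
Proof.
  intros H1 H2.
  pose proof (Rinv_0_lt_compat _ (cmin_pos _ _ H1)). pose proof (Rinv_0_lt_compat _ (cmin_pos _ _ H2)).
  eapply Rle_trans; [apply prod_nrm_snd|].
  eapply Rle_trans; [apply (shifted_resolvent_bound l' mu H2)|]. apply Rmult_le_compat_l; [lra|].
  eapply Rle_trans; [apply first_component_nrm|].
  eapply Rle_trans; [apply (shifted_resolvent_bound l mu H1)|]. apply Rmult_le_compat_l; [lra|].
  eapply Rle_trans; [apply first_component_nrm|].
  eapply Rle_trans; [apply (shifted_resolvent_bound l mu H1)|].
  rewrite prod_nrm, pnrm_0l, nrm_opp. lra.
Qed.

Lemma cmin_perturb l eta mu : Cmod eta <= Rabs (Cim l) / 2 ->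
  Rmin (Rabs (Cim l) / 2) (Rabs (Cim mu)) <= diag_coercivity (Cadd l eta) mu.
Proof.
  intro Heta. unfold diag_coercivity. pose proof (Cmod_ge_Rabs_Cim eta).
  pose proof (Rabs_triang_inv (Cim l) (- Cim eta)) as Ht.
  replace (Cim l - - Cim eta) with (Cim (Cadd l eta)) in Ht by (simpl; ring).
  rewrite Rabs_Ropp in Ht. unfold Rmin. repeat destruct Rle_dec; lra.
Qed.

Lemma weyl_resolvent_differentiable l mu : 0 < Cim l * Cim mu ->
  exists D : Hc -> Hc, forall eps, 0 < eps -> exists delta, 0 < delta /\
    forall eta, 0 < Cmod eta < delta -> 0 < Cim (Cadd l eta) * Cim mu -> forall u,
      nrm (vsub (vscal (Cinv eta) (vsub (weyl_resolvent (Cadd l eta) mu u) (weyl_resolvent l mu u)))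
                (D u)) <= eps * nrm u.
Proof.
  intro Hlm. exists (weyl_resolvent_deriv l mu). intros eps He.
  set (c0 := diag_coercivity l mu). assert (Hc0 : 0 < c0) by (apply cmin_pos; auto).
  assert (Hl : 0 < Rabs (Cim l)) by (apply Rabs_pos_lt; intro E; rewrite E in Hlm; lra).
  assert (Hm : 0 < Rabs (Cim mu)) by (apply Rabs_pos_lt; intro E; rewrite E in Hlm; lra).
  set (c1 := Rmin (Rabs (Cim l) / 2) (Rabs (Cim mu))).
  assert (Hc1 : 0 < c1) by (apply Rmin_glb_lt; lra).
  exists (Rmin (Rabs (Cim l) / 2) (eps * c1 * c0 * c0)).
  split; [apply Rmin_glb_lt; [lra|repeat apply Rmult_lt_0_compat; auto]|].
  intros eta [Heta1 Heta2] Hl' u.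
  pose proof (Rmin_l (Rabs (Cim l) / 2) (eps * c1 * c0 * c0)).
  pose proof (Rmin_r (Rabs (Cim l) / 2) (eps * c1 * c0 * c0)).
  assert (Hc' : c1 <= diag_coercivity (Cadd l eta) mu) by (apply cmin_perturb; lra).
  assert (Eeta : Csub (Cadd l eta) l = eta) by ring.
  assert (Hne : Cadd l eta <> l).
  { intro E. rewrite E in Eeta. rewrite <- Eeta in Heta1.
    replace (Csub l l) with C0 in Heta1 by ring. unfold Cmod in Heta1. simpl in Heta1.
    rewrite Rmult_0_l, Rplus_0_l, sqrt_0 in Heta1. lra. }
  pose proof (weyl_resolvent_quotient_error l (Cadd l eta) mu u Hlm Hl' Hne) as E.
  rewrite Eeta in E. rewrite E, nrm_scal.
  pose proof (weyl_resolvent_quotient_error_bound l (Cadd l eta) mu u Hlm Hl') as B. fold c0 in B.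
  assert (Hi : / diag_coercivity (Cadd l eta) mu <= / c1) by (apply Rinv_le_contravar; auto).
  pose proof (Cmod_nonneg eta). pose proof (nrm_nonneg u).
  assert (Hq : 0 <= / c0 * (/ c0 * nrm u))
    by (pose proof (Rinv_0_lt_compat _ Hc0); apply Rmult_le_pos; [lra|]; apply Rmult_le_pos; lra).
  assert (B' : nrm (snd (shifted_resolvent (Cadd l eta) mu (first_component (shifted_resolvent l mu
      (first_component (shifted_resolvent l mu (hs_zero, vopp u))))))) <= nrm u / (c1 * c0 * c0)).
  { eapply Rle_trans; [apply B|].
    replace (nrm u / (c1 * c0 * c0)) with (/ c1 * (/ c0 * (/ c0 * nrm u))) by (field; lra).
    apply Rmult_le_compat_r; auto. }
  eapply Rle_trans; [apply Rmult_le_compat_l; [auto|apply B']|].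
  assert (0 < c1 * c0 * c0) by (repeat apply Rmult_lt_0_compat; auto).
  apply Rle_trans with (eps * c1 * c0 * c0 * (nrm u / (c1 * c0 * c0))).
  - apply Rmult_le_compat_r; [apply Rmult_le_pos; [auto|left; apply Rinv_0_lt_compat; auto]|lra].
  - right. field. lra.
Qed.

Lemma weyl_resolvent_holomorphic mu (half : C -> Prop) :
  (forall l, half l -> 0 < Cim l * Cim mu) -> resolvent_holomorphic (weyl G) mu half.
Proof.
  intro Hhalf. exists (fun l u => weyl_resolvent l mu u). split; [|split].
  - intros l Hl u v. apply (weyl_resolvent_iff l mu (Hhalf l Hl)).
  - intros l Hl. split; [apply (weyl_resolvent_linear l mu (Hhalf l Hl))|].
    exists (/ diag_coercivity l mu). apply (weyl_resolvent_bound l mu (Hhalf l Hl)).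
  - intros l Hl. destruct (weyl_resolvent_differentiable l mu (Hhalf l Hl)) as [D HD].
    exists D. intros eps He. destruct (HD eps He) as [delta [Hd Hdd]].
    exists delta. split; auto.
Qed.

(* [M(l) + mu] is onto, so [M(l)] has no proper extension [S] on which
   [S + mu] is still injective. *)
Lemma weyl_maximal l mu (S : Hc -> Hc -> Prop) : 0 < Cim l * Cim mu ->
  linrel S -> (forall z, S z (vscal (Copp mu) z) -> z = hs_zero) ->
  (forall h h', weyl G l h h' -> S h h') -> forall h h', S h h' -> weyl G l h h'.
Proof.
  intros Hlm Slin Sinj Sext h h' Sh.
  set (u := vadd h' (vscal mu h)).
  pose proof (weyl_resolvent_spec l mu Hlm u) as W.
  set (v := weyl_resolvent l mu u) in *.
  assert (E : vsub h v = hs_zero).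
  { apply Sinj. replace (vscal (Copp mu) (vsub h v)) with (vsub h' (vsub u (vscal mu v))) by (unfold u; veq).
    apply (linrel_sub S Slin); auto. }
  apply vsub_eq0 in E. rewrite E. replace h' with (vsub u (vscal mu v)); auto. unfold u. rewrite E. veq.
Qed.

(* If [(k, k') in M(l)^*], then [z := k - (M(conj l) + nu)^{-1}(k' + nu k)] is an
   eigenvector of [M(l)^*] for [-nu]; testing it against
   [(M(l) + conj nu)^{-1} z] gives [(nu - conj nu) |z|^2 = 0]. *)
Lemma weyl_adj l : Cim l <> 0 -> forall h h', adj (weyl G l) h h' <-> weyl G (Cconj l) h h'.
Proof.
  intros Hl k k'. split; [|apply (weyl_conj_sub_adj G HG)].
  intro Hk. set (nu := mkC 0 (- Cim l)).
  assert (Hsq : 0 < Cim l * Cim l) by (apply Rsqr_pos_lt; auto).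
  assert (H1 : 0 < Cim (Cconj l) * Cim nu) by (simpl; nra).
  assert (H2 : 0 < Cim l * Cim (Cconj nu)) by (simpl; nra).
  set (u := vadd k' (vscal nu k)).
  pose proof (weyl_resolvent_spec (Cconj l) nu H1 u) as W.
  set (v := weyl_resolvent (Cconj l) nu u) in *.
  set (z := vsub k v).
  assert (Az : adj (weyl G l) z (vscal (Copp nu) z)).
  { replace (vscal (Copp nu) z) with (vadd k' (vscal (Copp C1) (vsub u (vscal nu v)))) by (unfold u, z; veq).
    replace z with (vadd k (vscal (Copp C1) v)) by (unfold z; veq).
    apply adj_lin_comb; auto. apply weyl_conj_sub_adj; auto. }
  pose proof (Az _ _ (weyl_resolvent_spec l (Cconj nu) H2 z)) as Ez.
  assert (Z : z = hs_zero).
  { apply ip_self_eq0. rewrite ip_sub_l, ip_scal_l, ip_scal_r in Ez. Cconj_simpl.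
    apply (f_equal Cre) in Ez. simpl in Ez. lra. }
  unfold z in Z. apply vsub_eq0 in Z. rewrite Z.
  replace k' with (vsub u (vscal nu v)); auto. unfold u. rewrite Z. veq.
Qed.

Lemma weyl_max_dissipative l : 0 < Cim l -> max_dissipative (weyl G l).
Proof.
  intro Hl. split; [apply (weyl_linrel G HG)|split].
  - intros h h' Hw. destruct (weyl_Cim G HG l h h' Hw) as [f E]. rewrite E.
    pose proof (nrm_nonneg f). nra.
  - intros S Slin Sdis Sext. apply (weyl_maximal l (mkC 0 1)); [simpl; lra|auto| |auto].
    intros z Sz. specialize (Sdis _ _ Sz). rewrite ip_scal_l, (ip_self_real z) in Sdis. simpl in Sdis.
    apply ip_self_eq0. pose proof (ip_self_Cre_nonneg z). lra.
Qed.

Lemma weyl_max_accumulative l : Cim l < 0 -> max_accumulative (weyl G l).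
Proof.
  intro Hl. split; [apply (weyl_linrel G HG)|split].
  - intros h h' Hw. destruct (weyl_Cim G HG l h h' Hw) as [f E]. rewrite E.
    pose proof (nrm_nonneg f). nra.
  - intros S Slin Sacc Sext. apply (weyl_maximal l (mkC 0 (-1))); [simpl; lra|auto| |auto].
    intros z Sz. specialize (Sacc _ _ Sz). rewrite ip_scal_l, (ip_self_real z) in Sacc. simpl in Sacc.
    apply ip_self_eq0. pose proof (ip_self_Cre_nonneg z). lra.
Qed.

Lemma weyl_nevanlinna : nevanlinna_family (weyl G).
Proof.
  split; [exact weyl_max_dissipative|split; [exact weyl_max_accumulative|split; [exact weyl_adj|split]]].
  - exists (mkC 0 1). split; [simpl; lra|]. apply weyl_resolvent_holomorphic. intros l Hl. simpl. lra.
  - exists (mkC 0 (-1)). split; [simpl; lra|]. apply weyl_resolvent_holomorphic. intros l Hl. simpl. lra.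
Qed.

(* [{k^, g^} in G^[*]] says exactly that [((g, k), (g', -k'))] lies in the
   adjoint of the main transform, which is the transform itself. *)
Lemma boundary_unitary : unitary G.
Proof.
  split; [auto|]. intros g g' k k'. split.
  - intros Gg f f' h h' Gf. apply (boundary_green G HG _ _ _ _ _ _ _ _ Gf Gg).
  - intro B.
    assert (Ad : adj T ((g, k) : P) ((g', vopp k') : P)).
    { intros [f h] [f' m] [h' [Em Gf]]. cbn [fst snd] in *. subst m.
      rewrite !prod_ip. cbn [fst snd]. rewrite ip_opp_l, ip_opp_r.
      pose proof (B f f' h h' Gf) as E. use_eq E. }
    destruct (transform_adj_sub _ _ Ad) as [h'' [E Gg]]. cbn [fst snd] in *.
    replace k' with h''; auto. transitivity (vopp (vopp h'')); [veq|]. rewrite <- E. veq.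
Qed.

End WeylFamily.

Theorem mainTheorem13 (Hf Hc : HilbertSpace) (A : Hf -> Hf -> Prop)
  (G : Hf -> Hf -> Hc -> Hc -> Prop) (H : Hf -> Hf -> Prop) (x : R) :
  linrel A -> closed_rel A -> symmetric_rel A ->
  isometric_boundary_pair A G ->
  selfadjoint H -> (forall f f', A f f' -> H f f') ->
  (forall f f', H f f' -> exists h h', G f f' h h') ->
  in_resolvent H (RtoC x) ->
  ((selfadjoint (weyl G (RtoC x)) /\ in_resolvent (rel_plus_scal (weyl G (RtoC x)) (RtoC x)) C0)
     <-> in_resolvent2 (main_transform G) (RtoC x)) /\
  ((selfadjoint (weyl G (RtoC x)) /\ in_resolvent (rel_plus_scal (weyl G (RtoC x)) (RtoC x)) C0) ->
     unitary_boundary_pair A G /\ nevanlinna_family (weyl G)).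
Proof.
  intros _ _ _ [HG Hdense] _ _ HdomG [_ [HHonto _]].
  assert (Honto : selfadjoint (weyl G (RtoC x)) /\
                  in_resolvent (rel_plus_scal (weyl G (RtoC x)) (RtoC x)) C0 ->
                  onto_at (transform_rel G) (RtoC x))
    by (intros [_ [_ [Msur _]]]; exact (transform_onto_of_weyl_plus_onto G HG x H HdomG HHonto Msur)).
  split; [split|].
  - intro Ha. exact (transform_resolvent_of_onto G HG x (Honto Ha)).
  - intro Hb. exact (weyl_resolvent_of_plus_onto G HG x (weyl_plus_onto_of_transform_resolvent G x Hb)).
  - intro Ha. split; [split; [exact (boundary_unitary G HG x (Honto Ha))|exact Hdense]|].
    exact (weyl_nevanlinna G HG x (Honto Ha)).
Qed.
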